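(* Let $n,m,l$ be positive integers, $f:\mathbb{R}^n\times\mathbb{R}^m\to\mathbb{R}^n$, $g:\mathbb{R}^n\times\mathbb{R}^m\to\mathbb{R}^{n\times l}$ smooth with $f(0,0)=0$, $g(0,0)=0$, and consider $\dot x=f(x,u)+g(x,u)\theta$ with constant unknown $\theta\in\mathbb{R}^l$. Let $k:\mathbb{R}^l\times\mathbb{R}^n\to\mathbb{R}^m$ be smooth with $k(\vartheta,0)=0$, and $V_\vartheta,Q_\vartheta:\mathbb{R}^n\to\mathbb{R}_+$ continuous, positive definite, radially unbounded, with $(\vartheta,x)\mapsto V_\vartheta(x),Q_\vartheta(x)$ continuous, such that: (H1) for each $\vartheta$, the origin is globally asymptotically stable for $\dot x=f(x,k(\vartheta,x))+g(x,k(\vartheta,x))\vartheta$ and every solution satisfies $V_\vartheta(x(t))\le Q_\vartheta(x(0))$ for $t\ge0$; (H2) for every nonempty compact $\Theta\subset\mathbb{R}^l$ and $M\ge0$ there is $R>0$ with $V_\vartheta(x)\le M,\ \vartheta\in\Theta\Rightarrow|x|\le R$; (H3) there is a positive integer $N$ such that: if there exist $0=\tau_0<\dots<\tau_N$, $\theta,d_0,\dots,d_N\in\mathbb{R}^l$ with all $d_i\ne0$, and a right differentiable $x\in C^0([0,\tau_N];\mathbb{R}^n)\cap C^1([0,\tau_N]\setminus\{\tau_0,\dots,\tau_N\};\mathbb{R}^n)$ with $\dot x(t)=f(x(t),k(\theta+d_i,x(t)))+g(x(t),k(\theta+d_i,x(t)))\theta$ on $[\tau_i,\tau_{i+1})$,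 $i=0,\dots,N-1$, and $g(x(t),k(\theta+d_j,x(t)))d_{i+1}=0$ for $t\in[\tau_j,\tau_{j+1}]$, $i=0,\dots,N-1$, $j=0,\dots,i$, then $x\equiv0$ on $[0,\tau_N]$. Suppose moreover that for each $\vartheta\in\mathbb{R}^l$ the origin is globally exponentially stable for $\dot x=f(x,k(\vartheta,x))+g(x,k(\vartheta,x))\vartheta$, i.e. there are $M_\vartheta,\omega_\vartheta>0$ with $|x(t)|\le M_\vartheta e^{-\omega_\vartheta t}|x(0)|$ for all solutions and $t\ge0$, and that for every nonempty compact $\Theta\subset\mathbb{R}^l$ there exist $K_2>K_1>0$ with $K_1|x|^2\le V_\vartheta(x)\le Q_\vartheta(x)\le K_2|x|^2$ for all $x\in\mathbb{R}^n$, $\vartheta\in\Theta$. Let $T>0$, let $a:\mathbb{R}^n\to\mathbb{R}_+$ be continuous, positive definite with $\sup\{|x|^{-2}a(x):x\ne0\}<+\infty$, and let $\tilde N>N$ be an integer. Then there exist constants $\tilde M_{\theta,\hat\theta}>0$, $(\theta,\hat\theta)\in\mathbb{R}^l\times\mathbb{R}^l$, such that for every $\theta\in\mathbb{R}^l$, $x_0\in\mathbb{R}^n$, $\hat\theta_0\in\mathbb{R}^l$ the solution of the hybrid closed-loop system (see context) with $x(0)=x_0$, $\hat\theta(0)=\hat\theta_0$ satisfies $|x(t)|\le\tilde M_{\theta,\hat\theta_0}e^{-\omega_\theta t}|x_0|$ for all $t\ge0$.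
   Context: Hybrid closed-loop system: event times $\tau_0=0$, $\tau_{i+1}=\min(\tau_i+T,r_i)$. On $[\tau_i,\tau_{i+1})$: $u(t)=k(\hat\theta(\tau_i),x(t))$, $\hat\theta(t)=\hat\theta(\tau_i)$, $x$ continuous solving $\dot x=f(x,u)+g(x,u)\theta$. Trigger: for $x(\tau_i)\ne0$, $r_i=\inf\{t>\tau_i:V_{\hat\theta(\tau_i)}(x(t))=Q_{\hat\theta(\tau_i)}(x(\tau_i))+a(x(\tau_i))\}$ ($\inf\emptyset=+\infty$); for $x(\tau_i)=0$, $r_i=\tau_i+T$. With $p(t,\sigma)=x(t)-x(\sigma)-\int_\sigma^tf(x(s),u(s))ds$, $q(t,\sigma)=\int_\sigma^tg(x(s),u(s))ds$, $\mu_{i+1}=\min\{\tau_j:j\in\{0,\dots,i\},\tau_j\ge\tau_{i+1}-\tilde NT\}$, $G=\iint_{[\mu_{i+1},\tau_{i+1}]^2}q'(t,\sigma)q(t,\sigma)d\sigma dt$, $Z=\iint_{[\mu_{i+1},\tau_{i+1}]^2}q'(t,\sigma)p(t,\sigma)d\sigma dt$, the update is $\hat\theta(\tau_{i+1})=\arg\min\{|\vartheta-\hat\theta(\tau_i)|^2:\vartheta\in\mathbb{R}^l,\ Z=G\vartheta\}$. Positive definite: $V(0)=0$, $V(x)>0$ for $x\ne0$; radially unbounded: sublevel sets compact. *)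

From Stdlib Require Import Reals Lra List.
From Coquelicot Require Import Coquelicot.
From mathcomp Require Import ssreflect ssrfun ssrbool eqtype ssrnat seq fintype bigop.
Open Scope R_scope.

Definition vec (n : nat) := 'I_n -> R.
Definition mat (n l : nat) := 'I_n -> 'I_l -> R.

Definition vzero {n : nat} : vec n := fun _ => 0.
Definition mzero {n l : nat} : mat n l := fun _ _ => 0.
Definition vadd {n : nat} (x y : vec n) : vec n := fun i => x i + y i.
Definition vsub {n : nat} (x y : vec n) : vec n := fun i => x i - y i.
Definition vscal {n : nat} (c : R) (x : vec n) : vec n := fun i => c * x i.
Definition rsum {n : nat} (F : 'I_n -> R) : R := \big[Rplus/0]_(i < n) F i.
Definition vnorm {n : nat} (x : vec n) : R := sqrt (rsum (fun i => x i ^ 2)).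
Definition mvmul {n l : nat} (A : mat n l) (v : vec l) : vec n :=
  fun i => rsum (fun j => A i j * v j).

Definition vcont1 {p : nat} (F : vec p -> R) : Prop :=
  forall x eps, 0 < eps -> exists delta, 0 < delta /\
    forall x', vnorm (vsub x' x) < delta -> Rabs (F x' - F x) < eps.
Definition vcont2 {p q : nat} (F : vec p -> vec q -> R) : Prop :=
  forall x y eps, 0 < eps -> exists delta, 0 < delta /\
    forall x' y', vnorm (vsub x' x) < delta -> vnorm (vsub y' y) < delta ->
      Rabs (F x' y' - F x y) < eps.

Fixpoint dd {p q : nat} (ds : list (vec p * vec q)) (F : vec p -> vec q -> R)
  : vec p -> vec q -> R :=
  match ds with
  | nil => F
  | (v, w) :: ds' => fun x y =>
      Derive (fun h => dd ds' F (vadd x (vscal h v)) (vadd y (vscal h w))) 0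
  end.
(* C^infinity: all iterated directional derivatives exist everywhere and are continuous *)
Definition smooth2 {p q : nat} (F : vec p -> vec q -> R) : Prop :=
  forall ds, vcont2 (dd ds F) /\
    forall v w x y,
      ex_derive (fun h => dd ds F (vadd x (vscal h v)) (vadd y (vscal h w))) 0.

Definition vderiv {n : nat} (x : R -> vec n) (t : R) (v : vec n) : Prop :=
  forall j, is_derive (fun s => x s j) t (v j).
Definition vrderiv {n : nat} (x : R -> vec n) (t : R) (v : vec n) : Prop :=
  forall j, filterlim (fun h => (x (t + h) j - x t j) / h) (at_right 0) (locally (v j)).
Definition cont_on {n : nat} (D : R -> Prop) (x : R -> vec n) : Prop :=
  forall t, D t -> forall eps, 0 < eps -> exists delta, 0 < delta /\
    forall s, D s -> Rabs (s - t) < delta -> vnorm (vsub (x s) (x t)) < eps.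

Definition is_sol {n : nat} (F : vec n -> vec n) (x : R -> vec n) : Prop :=
  cont_on (fun t => 0 <= t) x /\ vrderiv x 0 (F (x 0)) /\
  forall t, 0 < t -> vderiv x t (F (x t)).

(* global asymptotic stability of the origin (includes forward completeness) *)
Definition GAS {n : nat} (F : vec n -> vec n) : Prop :=
  (forall x0, exists x, is_sol F x /\ x 0 = x0) /\
  (forall eps, 0 < eps -> exists delta, 0 < delta /\
     forall x, is_sol F x -> vnorm (x 0) < delta -> forall t, 0 <= t -> vnorm (x t) < eps) /\
  (forall x, is_sol F x -> forall eps, 0 < eps ->
     exists T0, forall t, T0 <= t -> vnorm (x t) < eps).

Definition plant {n m l : nat} (f : vec n -> vec m -> vec n) (g : vec n -> vec m -> mat n l)
  (x : vec n) (u : vec m) (theta : vec l) : vec n :=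
  vadd (f x u) (mvmul (g x u) theta).
Definition cl_field {n m l : nat} (f : vec n -> vec m -> vec n) (g : vec n -> vec m -> mat n l)
  (k : vec l -> vec n -> vec m) (th : vec l) : vec n -> vec n :=
  fun x => plant f g x (k th x) th.

Definition posdef {n : nat} (V : vec n -> R) : Prop :=
  V vzero = 0 /\ forall x, x <> vzero -> 0 < V x.
Definition open_set {n : nat} (S : vec n -> Prop) : Prop :=
  forall x, S x -> exists r, 0 < r /\ forall y, vnorm (vsub y x) < r -> S y.
Definition compact_set {n : nat} (K : vec n -> Prop) : Prop :=
  forall (I : Type) (U : I -> vec n -> Prop),
    (forall i, open_set (U i)) -> (forall x, K x -> exists i, U i x) ->
    exists L : list I, forall x, K x -> exists i, In i L /\ U i x.
(* radially unbounded: all sublevel sets compact *)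
Definition rad_unbounded {n : nat} (V : vec n -> R) : Prop :=
  forall c, compact_set (fun x => V x <= c).

Definition H3_prop {n m l : nat} (f : vec n -> vec m -> vec n) (g : vec n -> vec m -> mat n l)
  (k : vec l -> vec n -> vec m) (N : nat) : Prop :=
  forall (tau : nat -> R) (theta : vec l) (d : nat -> vec l) (x : R -> vec n),
    tau 0%nat = 0 ->
    (forall i, (i < N)%nat -> tau i < tau i.+1) ->
    (forall i, (i <= N)%nat -> d i <> vzero) ->
    cont_on (fun t => 0 <= t <= tau N) x ->
    (forall i, (i < N)%nat ->
       vrderiv x (tau i) (plant f g (x (tau i)) (k (vadd theta (d i)) (x (tau i))) theta) /\
       (forall t, tau i < t < tau i.+1 ->
          vderiv x t (plant f g (x t) (k (vadd theta (d i)) (x t)) theta))) ->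
    (forall i j, (i < N)%nat -> (j <= i)%nat -> forall t, tau j <= t <= tau j.+1 ->
       mvmul (g (x t) (k (vadd theta (d j)) (x t))) (d i.+1) = vzero) ->
    forall t, 0 <= t <= tau N -> x t = vzero.

Definition p_fun {n m : nat} (f : vec n -> vec m -> vec n) (x : R -> vec n) (u : R -> vec m)
  (t s : R) : vec n :=
  fun j => x t j - x s j - RInt (fun r => f (x r) (u r) j) s t.
Definition q_fun {n m l : nat} (g : vec n -> vec m -> mat n l) (x : R -> vec n) (u : R -> vec m)
  (t s : R) : mat n l :=
  fun j c => RInt (fun r => g (x r) (u r) j c) s t.
Definition Gmat {n m l : nat} (g : vec n -> vec m -> mat n l) (x : R -> vec n) (u : R -> vec m)
  (a b : R) : mat l l :=
  fun c1 c2 => RInt (fun t => RInt (fun s =>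
    rsum (fun j => q_fun g x u t s j c1 * q_fun g x u t s j c2)) a b) a b.
Definition Zvec {n m l : nat} (f : vec n -> vec m -> vec n) (g : vec n -> vec m -> mat n l)
  (x : R -> vec n) (u : R -> vec m) (a b : R) : vec l :=
  fun c => RInt (fun t => RInt (fun s =>
    rsum (fun j => q_fun g x u t s j c * p_fun f x u t s j)) a b) a b.

Definition is_min (P : R -> Prop) (y : R) : Prop := P y /\ forall z, P z -> y <= z.

Definition mu_set (tau : nat -> R) (T : R) (Ntil i : nat) : R -> Prop :=
  fun y => exists j, (j <= i)%nat /\ y = tau j /\ tau i.+1 - INR Ntil * T <= tau j.

Definition hybrid_sol {n m l : nat} (f : vec n -> vec m -> vec n) (g : vec n -> vec m -> mat n l)
  (k : vec l -> vec n -> vec m) (V Q : vec l -> vec n -> R) (a : vec n -> R)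
  (T : R) (Ntil : nat) (theta : vec l)
  (x : R -> vec n) (u : R -> vec m) (th : R -> vec l) (tau : nat -> R) : Prop :=
  tau 0%nat = 0 /\
  (forall t, 0 <= t -> exists i, tau i <= t < tau i.+1) /\
  cont_on (fun t => 0 <= t) x /\
  forall i : nat,
    (forall t, tau i <= t < tau i.+1 -> u t = k (th (tau i)) (x t) /\ th t = th (tau i)) /\
    vrderiv x (tau i) (plant f g (x (tau i)) (k (th (tau i)) (x (tau i))) theta) /\
    (forall t, tau i < t < tau i.+1 -> vderiv x t (plant f g (x t) (u t) theta)) /\
    (x (tau i) = vzero -> tau i.+1 = tau i + T) /\
    (x (tau i) <> vzero ->
       Rbar.Finite (tau i.+1) = Rbar_min (Rbar.Finite (tau i + T))
         (Glb_Rbar (fun t => tau i < t /\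
            V (th (tau i)) (x t) = Q (th (tau i)) (x (tau i)) + a (x (tau i))))) /\
    (forall mu, is_min (mu_set tau T Ntil i) mu ->
       mvmul (Gmat g x u mu (tau i.+1)) (th (tau i.+1)) = Zvec f g x u mu (tau i.+1) /\
       forall v : vec l, mvmul (Gmat g x u mu (tau i.+1)) v = Zvec f g x u mu (tau i.+1) ->
         vnorm (vsub (th (tau i.+1)) (th (tau i))) <= vnorm (vsub v (th (tau i)))).

(* The estimate never moves away from the true parameter: [theta] always solves the
   estimator's equation [G v = Z] (along the trajectory [p(t,s) = q(t,s) theta]), so the
   minimum-norm update gives [|est (i+1) - est i| <= |theta - est i|]; hence
   [|est i - theta| <= 2^i |est 0 - theta|], and once an estimate equals [theta] it stays.
   If [est j = theta] for some [j <= N], then after [tau j <= N T] the state follows the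
   nominal closed loop and decays exponentially; before that, the trigger
   [V <= Q + a] together with [K1 |x|^2 <= V <= Q <= K2 |x|^2] and [a <= C |x|^2] bounds
   the growth of [x] on each of the at most [N] inter-event intervals, with constants
   uniform on a compact box containing the first estimates.  Otherwise every error
   [est i - theta] is nonzero; since a vanishing quadratic form [v' G v] forces [g v = 0]
   along the trajectory, these errors satisfy the hypotheses of (H3), so [x 0 = 0], and
   [x] stays at the origin because the closed-loop field is linearly bounded near it. *)

From HB Require Import structures.
From Stdlib Require Import Reals Lra Classical ClassicalEpsilon FunctionalExtensionality List.
From Coquelicot Require Import Coquelicot.
From mathcomp Require Import ssreflect ssrfun ssrbool eqtype ssrnat seq fintype finfun bigop.
Open Scope R_scope.

(** * Finite sums and the Euclidean norm *)

HB.instance Definition _ := Monoid.isComLaw.Build R 0 Rplus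
  (fun x y z => esym (Rplus_assoc x y z)) Rplus_comm Rplus_0_l.
HB.instance Definition _ := Monoid.isComLaw.Build R 1 Rmult
  (fun x y z => esym (Rmult_assoc x y z)) Rmult_comm Rmult_1_l.
HB.instance Definition _ := Monoid.isMulLaw.Build R 0 Rmult Rmult_0_l Rmult_0_r.
HB.instance Definition _ :=
  Monoid.isAddLaw.Build R Rmult Rplus Rmult_plus_distr_r Rmult_plus_distr_l.

Lemma rsum_ext {p} (F G : 'I_p -> R) : (forall i, F i = G i) -> rsum F = rsum G.
Proof. by move=> FG; apply: eq_bigr => i _. Qed.

Lemma rsum_plus {p} (F G : 'I_p -> R) : rsum (fun i => F i + G i) = rsum F + rsum G.
Proof. exact: big_split. Qed.

Lemma rsum_scal {p} c (F : 'I_p -> R) : rsum (fun i => c * F i) = c * rsum F.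
Proof. by rewrite /rsum big_distrr. Qed.

Lemma rsum_minus {p} (F G : 'I_p -> R) : rsum (fun i => F i - G i) = rsum F - rsum G.
Proof.
rewrite (rsum_ext _ (fun i => F i + -1 * G i)) ?rsum_plus ?rsum_scal; first ring.
by move=> i; ring.
Qed.

Lemma rsum_swap {p q} (F : 'I_p -> 'I_q -> R) :
  rsum (fun i => rsum (fun j => F i j)) = rsum (fun j => rsum (fun i => F i j)).
Proof. exact: exchange_big. Qed.

Lemma rsum0 {p} : rsum (fun _ : 'I_p => 0) = 0.
Proof. exact: big1. Qed.

Lemma rsum_const {p} c : rsum (fun _ : 'I_p => c) = INR p * c.
Proof.
rewrite /rsum big_const_ord; elim: p => [|p IH] /=; first ring.
by rewrite IH; case: p {IH} => [|p] /=; ring.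
Qed.

Lemma rsum_le {p} (F G : 'I_p -> R) : (forall i, F i <= G i) -> rsum F <= rsum G.
Proof. move=> FG; rewrite /rsum; elim/big_ind2: _ => [| * |j _]; [lra | lra | exact: FG]. Qed.

Lemma rsum_ge0 {p} (F : 'I_p -> R) : (forall i, 0 <= F i) -> 0 <= rsum F.
Proof. by move=> F0; rewrite -(@rsum0 p); apply: rsum_le. Qed.

Lemma rsum_le_const {p} (F : 'I_p -> R) c : (forall i, F i <= c) -> rsum F <= INR p * c.
Proof. by move=> Fc; rewrite -rsum_const; apply: rsum_le. Qed.

Lemma rsum_ge_term {p} (F : 'I_p -> R) i : (forall i, 0 <= F i) -> F i <= rsum F.
Proof.
move=> F0; rewrite /rsum (bigD1 i) //= -{1}(Rplus_0_r (F i)).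
apply: Rplus_le_compat_l.
by elim/big_ind: _ => [| * |j _]; [lra | lra | exact: F0].
Qed.

Lemma rsum_ge0_eq0 {p} (F : 'I_p -> R) : (forall i, 0 <= F i) -> rsum F = 0 -> forall i, F i = 0.
Proof. by move=> F0 F_0 i; have := rsum_ge_term F i F0; have := F0 i; lra. Qed.

Lemma Rabs_rsum_le {p} (F : 'I_p -> R) : Rabs (rsum F) <= rsum (fun i => Rabs (F i)).
Proof.
rewrite /rsum; elim/big_ind2: _ => [| x1 x2 y1 y2 h1 h2 | i _]; last lra.
- by rewrite Rabs_R0; lra.
- by apply: Rle_trans (Rabs_triang _ _) _; lra.
Qed.

Lemma sumsq_ge0 {p} (x : vec p) : 0 <= rsum (fun i => x i ^ 2).
Proof. by apply: rsum_ge0 => i; nra. Qed.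

Lemma vnorm_ge0 {p} (x : vec p) : 0 <= vnorm x.
Proof. exact: sqrt_pos. Qed.

Lemma vnorm_sq {p} (x : vec p) : vnorm x ^ 2 = rsum (fun i => x i ^ 2).
Proof. by rewrite /vnorm /= Rmult_1_r sqrt_sqrt //; exact: sumsq_ge0. Qed.

Lemma Rabs_coord_le_vnorm {p} (x : vec p) i : Rabs (x i) <= vnorm x.
Proof.
rewrite /vnorm -sqrt_Rsqr_abs; apply: sqrt_le_1_alt.
by have := rsum_ge_term (fun i => x i ^ 2) i (fun j => ltac:(nra)); rewrite /Rsqr /=; lra.
Qed.

Lemma vnorm_le_l1 {p} (x : vec p) : vnorm x <= rsum (fun i => Rabs (x i)).
Proof.
have l1_ge0 : 0 <= rsum (fun i => Rabs (x i)) by apply: rsum_ge0 => i; exact: Rabs_pos.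
rewrite /vnorm -(sqrt_pow2 _ l1_ge0); apply: sqrt_le_1_alt; rewrite /rsum.
suff : (fun a b => 0 <= a /\ 0 <= b /\ a <= b ^ 2)
  (\big[Rplus/0]_(i < p) x i ^ 2) (\big[Rplus/0]_(i < p) Rabs (x i)) by case=> _ [].
apply: (big_ind2 (fun a b => 0 <= a /\ 0 <= b /\ a <= b ^ 2)) => [| a1 a2 b1 b2 | i _].
- lra.
- by move=> [? [? ?]] [? [? ?]]; split; [lra | split; nra].
- by have := Rabs_pos (x i); have := Rsqr_abs (x i); rewrite /Rsqr /=; nra.
Qed.

Lemma vnorm_mono {p} (a b : vec p) : (forall i, Rabs (a i) <= Rabs (b i)) -> vnorm a <= vnorm b.
Proof.
move=> ab; apply: sqrt_le_1_alt; apply: rsum_le => i.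
have := Rsqr_abs (a i); have := Rsqr_abs (b i); rewrite /Rsqr /= !Rmult_1_r => -> ->.
by have := ab i; have := Rabs_pos (a i); nra.
Qed.

Lemma vnorm0 {p} : vnorm (@vzero p) = 0.
Proof. by rewrite /vnorm (rsum_ext _ (fun _ => 0)) ?rsum0 ?sqrt_0 // => i; rewrite /vzero; ring. Qed.

Lemma vnorm_eq0 {p} (x : vec p) : vnorm x = 0 -> x = vzero.
Proof.
move=> x0; apply: functional_extensionality => i.
have := Rabs_coord_le_vnorm x i; have := Rabs_pos (x i); rewrite x0 => *.
by apply: Rabs_eq_0; lra.
Qed.

Lemma vnorm_gt0 {p} (x : vec p) : x <> vzero -> 0 < vnorm x.
Proof. by move=> nx0; case: (vnorm_ge0 x) => // /esym /vnorm_eq0. Qed.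

Lemma vnorm_vsubC {p} (a b : vec p) : vnorm (vsub a b) = vnorm (vsub b a).
Proof. by rewrite /vnorm; f_equal; apply: rsum_ext => i; rewrite /vsub; ring. Qed.

Lemma vnorm_vadd_le {p} (a b : vec p) c :
  vnorm a <= c -> vnorm b <= c -> vnorm (vadd a b) <= 2 * c.
Proof.
move=> ac bc; have a0 := vnorm_ge0 a; have b0 := vnorm_ge0 b.
have : vnorm (vadd a b) ^ 2 <= 2 * vnorm a ^ 2 + 2 * vnorm b ^ 2.
  rewrite !vnorm_sq -!rsum_scal -rsum_plus; apply: rsum_le => i.
  by rewrite /vadd; have := pow2_ge_0 (a i - b i); nra.
move=> h; apply: Rnot_lt_le => lt2c.
by have := vnorm_ge0 (vadd a b); nra.
Qed.

Lemma vsubvv {p} (y : vec p) : vsub y y = vzero.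
Proof. by apply: functional_extensionality => i; rewrite /vsub /vzero; ring. Qed.

Lemma vsubv0 {p} (z : vec p) : vsub z vzero = z.
Proof. by apply: functional_extensionality => i; rewrite /vsub /vzero; ring. Qed.

Lemma vsub_eq0 {p} (a b : vec p) : vsub a b = vzero -> a = b.
Proof.
move=> ab0; apply: functional_extensionality => c.
by have := f_equal (fun v => v c) ab0; rewrite /vsub /vzero /=; lra.
Qed.

Lemma vadd_vsub {p} (a b : vec p) : vadd b (vsub a b) = a.
Proof. by apply: functional_extensionality => c; rewrite /vadd /vsub; ring. Qed.

Lemma mvmul_vsub {p q} (G : mat p q) a b : mvmul G (vsub a b) = vsub (mvmul G a) (mvmul G b).
Proof.
apply: functional_extensionality => c; rewrite /mvmul /vsub -rsum_minus.
by apply: rsum_ext => j; ring.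
Qed.

Lemma sq_le_lin r s c : 0 <= r -> 0 <= s -> 0 <= c -> r ^ 2 <= c * s ^ 2 -> r <= (c + 1) * s.
Proof.
move=> r0 s0 c0 rs; apply: Rnot_lt_le => lt.
have : ((c + 1) * s) * ((c + 1) * s) < r * r by apply: Rmult_le_0_lt_compat => //; nra.
have : c * s ^ 2 <= ((c + 1) * s) * ((c + 1) * s) by nra.
lra.
Qed.

Lemma exp_shift_le w s S t : 0 <= w -> s <= S -> exp (- w * (t - s)) <= exp (w * S) * exp (- w * t).
Proof.
move=> w0 sS; rewrite -exp_plus.
case: (Req_dec (- w * (t - s)) (w * S + - w * t)) => [-> | ne]; first lra.
by left; apply: exp_increasing; nra.
Qed.

(** * Compactness of boxes *)

Definition box {p} (lo : vec p) (s : R) : vec p -> Prop :=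
  fun y => forall c, lo c <= y c <= lo c + s.

Lemma In_mem {T : eqType} (x : T) (s : seq T) : x \in s -> List.In x s.
Proof. by elim: s => //= a s IH; rewrite in_cons => /orP [/eqP ->|/IH]; [left | right]. Qed.

Lemma box_vnorm_le {p} (lo y z : vec p) s :
  0 <= s -> box lo s y -> box lo s z -> vnorm (vsub y z) <= INR p * s.
Proof.
move=> s0 hy hz; apply: Rle_trans (vnorm_le_l1 _) _; apply: rsum_le_const => c.
by have := hy c; have := hz c; rewrite /vsub => *; apply: Rabs_le; lra.
Qed.

Lemma geometric_lt {p} s r : 0 < r -> exists K, s * (/ 2) ^ K * INR p < r.
Proof.
move=> r0; have hp := pos_INR p.
case: (pow_lt_1_zero (/ 2) _ (r / ((Rabs s + 1) * (INR p + 1))) _) => [| | K HK].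
- by rewrite Rabs_pos_eq; lra.
- by apply: Rdiv_lt_0_compat => //; have := Rabs_pos s; nra.
exists K; have := HK K (le_n K); rewrite Rabs_pos_eq; last by apply: pow_le; lra.
have := pow_le (/ 2) K ltac:(lra); have := Rabs_pos s; have := Rle_abs s.
set q := (/ 2) ^ K => q0 s0 ss qK.
have : q * ((Rabs s + 1) * (INR p + 1)) < r.
  by move: qK; rewrite /Rdiv; move/(Rmult_lt_compat_r ((Rabs s + 1) * (INR p + 1)));
     rewrite Rmult_assoc Rinv_l; nra.
have qp0 : 0 <= q * INR p by nra.
have : s * (q * INR p) <= Rabs s * (q * INR p) by apply: Rmult_le_compat_r.
nra.
Qed.

Section BoxCompact.
Variables (p : nat) (I : Type) (U : I -> vec p -> Prop).

Definition finitely_covered (B : vec p -> Prop) :=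
  exists L : list I, forall x, B x -> exists i, List.In i L /\ U i x.

Definition subbox (lo : vec p) (s : R) (b : {ffun 'I_p -> bool}) : vec p :=
  fun c => lo c + (if b c then s / 2 else 0).

Lemma uncovered_subbox lo s : ~ finitely_covered (box lo s) ->
  exists b, ~ finitely_covered (box (subbox lo s b) (s / 2)).
Proof.
move=> uncov; apply: NNPP => all_cov; apply: uncov.
have cov b : finitely_covered (box (subbox lo s b) (s / 2)).
  by apply: NNPP => h; apply: all_cov; exists b.
pose Lb b := proj1_sig (constructive_indefinite_description _ (cov b)).
have HL b : forall x, box (subbox lo s b) (s / 2) x -> exists i, List.In i (Lb b) /\ U i x.
  by rewrite /Lb; case: (constructive_indefinite_description _ _).
exists (flat_map Lb (enum {ffun 'I_p -> bool})) => y hy.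
pose b := [ffun c => if Rle_dec (lo c + s / 2) (y c) then true else false].
have [|i [iL Ui]] := HL b y.
  by move=> c; rewrite /subbox /b ffunE; case: Rle_dec => /= h; have := hy c; lra.
exists i; split => //; apply/in_flat_map; exists b; split => //.
exact/In_mem/mem_enum.
Qed.

Lemma ex_uncovered_half (ls : vec p * R) : exists b : {ffun 'I_p -> bool},
  ~ finitely_covered (box ls.1 ls.2) -> ~ finitely_covered (box (subbox ls.1 ls.2 b) (ls.2 / 2)).
Proof.
case: (classic (finitely_covered (box ls.1 ls.2))) => [cov | /uncovered_subbox [b hb]].
- by exists [ffun _ => false].
- by exists b.
Qed.

Definition uncovered_half (ls : vec p * R) :=
  proj1_sig (constructive_indefinite_description _ (ex_uncovered_half ls)).

Fixpoint bisection (lo : vec p) (s : R) (k : nat) : vec p * R :=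
  match k with
  | O => (lo, s)
  | S k' => let ls := bisection lo s k' in (subbox ls.1 ls.2 (uncovered_half ls), ls.2 / 2)
  end.

Variables (lo : vec p) (s : R).
Hypothesis s0 : 0 <= s.

Lemma bisection_size k : (bisection lo s k).2 = s * (/ 2) ^ k.
Proof. by elim: k => [|k IH] /=; [ring | rewrite IH; field]. Qed.

Lemma bisection_size_ge0 k : 0 <= (bisection lo s k).2.
Proof. by rewrite bisection_size; apply: Rmult_le_pos => //; apply: pow_le; lra. Qed.

Lemma bisection_uncovered k :
  ~ finitely_covered (box lo s) -> ~ finitely_covered (box (bisection lo s k).1 (bisection lo s k).2).
Proof.
move=> h; elim: k => [|k IH] //=; rewrite /uncovered_half.
by case: (constructive_indefinite_description _ _) => b /= /(_ IH).
Qed.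

Lemma bisection_nested k d c :
  (bisection lo s k).1 c <= (bisection lo s (k + d)).1 c /\
  (bisection lo s (k + d)).1 c + (bisection lo s (k + d)).2
    <= (bisection lo s k).1 c + (bisection lo s k).2.
Proof.
elim: d => [|d IH]; first by rewrite addn0; lra.
rewrite addnS /= /subbox; have := bisection_size_ge0 (k + d).
by case: (uncovered_half _ c) => /=; lra.
Qed.

Lemma bisection_corner_le c k k' :
  (bisection lo s k').1 c <= (bisection lo s k).1 c + (bisection lo s k).2.
Proof.
case: (leqP k k') => [kk' | /ltnW k'k].
- rewrite -(subnKC kk').
  by have := bisection_nested k (k' - k) c; have := bisection_size_ge0 (k + (k' - k)); lra.
- rewrite -(subnKC k'k).
  by have := bisection_nested k' (k - k') c; have := bisection_size_ge0 (k' + (k - k')); lra.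
Qed.

Lemma bisection_limit : exists pt : vec p, forall k, box (bisection lo s k).1 (bisection lo s k).2 pt.
Proof.
have lub c : {m | is_lub (fun v => exists k, v = (bisection lo s k).1 c) m}.
  apply: completeness; last by exists ((bisection lo s 0).1 c), 0%nat.
  by exists ((bisection lo s 0).1 c + (bisection lo s 0).2) => v [k ->]; apply: bisection_corner_le.
exists (fun c => proj1_sig (lub c)) => k c; case: (lub c) => m [ub least] /=; split.
- by apply: ub; exists k.
- by apply: least => v [k' ->]; apply: bisection_corner_le.
Qed.

End BoxCompact.

Lemma box_compact {p} (lo : vec p) s : 0 <= s -> compact_set (box lo s).
Proof.
move=> s0 I U Uopen Ucover; apply: NNPP => uncov.
have [pt pt_in] := bisection_limit p I U lo s s0.
have [i Ui] := Ucover pt (pt_in 0%nat).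
have [r [r0 ball_in]] := Uopen i pt Ui.
have [K Ksmall] := @geometric_lt p s r r0.
apply: (bisection_uncovered p I U lo s K uncov); exists (i :: nil) => y hy.
exists i; split; first by left.
apply: ball_in; apply: Rle_lt_trans Ksmall.
rewrite -(bisection_size p I U lo s K) Rmult_comm.
exact: box_vnorm_le (bisection_size_ge0 _ _ _ _ _ s0 K) hy (pt_in K).
Qed.

Lemma box_of_vnorm {p} (c y : vec p) r : vnorm (vsub y c) <= r -> box (fun i => c i - r) (2 * r) y.
Proof.
move=> yc i; have : Rabs (y i - c i) <= r := Rle_trans _ _ _ (Rabs_coord_le_vnorm (vsub y c) i) yc.
by split_Rabs; lra.
Qed.

(** * Continuity on subsets of the real line *)

Lemma rsum_fun_ind {p} (P : (R -> R) -> R -> Prop) (F : 'I_p -> R -> R) (v : 'I_p -> R) :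
  P (fun _ => 0) 0 -> (forall f g a b, P f a -> P g b -> P (fun r => f r + g r) (a + b)) ->
  (forall i, P (F i) (v i)) -> P (fun r => rsum (fun i => F i r)) (rsum v).
Proof.
move=> P0 Pplus; elim: p F v => [|p IH] F v PF.
  rewrite /rsum big_ord0 (_ : (fun r => _) = fun _ => 0) //.
  by apply: functional_extensionality => r; rewrite big_ord0.
rewrite /rsum big_ord_recr /=.
rewrite (_ : (fun r => _) = fun r => rsum (fun i : 'I_p => F (widen_ord (leqnSn p) i) r) + F ord_max r).
  by apply: Pplus => //; apply: IH => i.
by apply: functional_extensionality => r; rewrite /rsum big_ord_recr.
Qed.

Lemma continuousP (f : R -> R) x : continuous f x <->
  forall eps, 0 < eps -> exists d, 0 < d /\ forall y, Rabs (y - x) < d -> Rabs (f y - f x) < eps.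
Proof.
split => [/continuity_pt_filterlim fc eps e0 | H]; last apply/continuity_pt_filterlim => eps e0.
- have [d [d0 Hd]] := fc eps e0; exists d; split => // y yx.
  case: (Req_dec y x) => [-> | yNx]; first by rewrite Rminus_diag Rabs_R0.
  by apply: Hd; split => //; split => //; apply: not_eq_sym.
- have [d [d0 Hd]] := H eps e0; exists d; split => // y [_ yx]; exact: Hd.
Qed.

Definition cont_within (D : R -> Prop) (phi : R -> R) : Prop :=
  forall t, D t -> forall eps, 0 < eps -> exists d, 0 < d /\
    forall s, D s -> Rabs (s - t) < d -> Rabs (phi s - phi t) < eps.

Lemma cont_withinP D phi :
  cont_within D phi <-> forall t, D t -> filterlim phi (within D (locally t)) (locally (phi t)).
Proof.
split => [H t Dt | H t Dt eps e0].
- apply/filterlim_locally => eps; have [d [d0 Hd]] := H t Dt eps (cond_pos eps).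
  by exists (mkposreal d d0) => s st Ds; apply: Hd.
- have [d Hd] := proj1 (filterlim_locally _ _) (H t Dt) (mkposreal eps e0).
  by exists d; split => [|s Ds st]; [exact: cond_pos | exact: Hd].
Qed.

Lemma cont_within_subset D D' phi : (forall t, D' t -> D t) -> cont_within D phi -> cont_within D' phi.
Proof.
move=> D'D H t D't eps e0; have [d [d0 Hd]] := H t (D'D t D't) eps e0.
by exists d; split => // s D's; apply: Hd (D'D s D's).
Qed.

Lemma cont_within_of_continuous D phi : (forall t, continuous phi t) -> cont_within D phi.
Proof.
move=> H t _ eps e0; have [d [d0 Hd]] := proj1 (continuousP phi t) (H t) eps e0.
by exists d; split => // s _; apply: Hd.
Qed.

Lemma continuous_of_cont_within phi : cont_within (fun _ => True) phi -> forall t, continuous phi t.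
Proof.
move=> H t; apply/continuousP => eps e0; have [d [d0 Hd]] := H t I eps e0.
by exists d; split => // y; apply: Hd.
Qed.

Lemma cont_within_const D c : cont_within D (fun _ => c).
Proof. by apply: cont_within_of_continuous => t; apply: continuous_const. Qed.

Lemma cont_within_plus D f g : cont_within D f -> cont_within D g -> cont_within D (fun r => f r + g r).
Proof.
move=> /cont_withinP fc /cont_withinP gc; apply/cont_withinP => t Dt.
exact: filterlim_comp_2 (fc t Dt) (gc t Dt) (filterlim_plus (f t) (g t)).
Qed.

Lemma cont_within_mult D f g : cont_within D f -> cont_within D g -> cont_within D (fun r => f r * g r).
Proof.
move=> /cont_withinP fc /cont_withinP gc; apply/cont_withinP => t Dt.
exact: filterlim_comp_2 (fc t Dt) (gc t Dt) (filterlim_mult (f t) (g t)).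
Qed.

Lemma cont_within_minus D f g : cont_within D f -> cont_within D g -> cont_within D (fun r => f r - g r).
Proof.
move=> fc gc; have := cont_within_plus D f _ fc (cont_within_mult D _ _ (cont_within_const D (-1)) gc).
by rewrite (_ : (fun r => _) = fun r => f r - g r) //; apply: functional_extensionality => r; ring.
Qed.

Lemma cont_within_rsum {p} D (F : 'I_p -> R -> R) :
  (forall i, cont_within D (F i)) -> cont_within D (fun r => rsum (fun i => F i r)).
Proof.
move=> Fc; apply: (rsum_fun_ind (fun f _ => cont_within D f) F (fun _ => 0)) => //.
- exact: cont_within_const.
- by move=> f g _ _; apply: cont_within_plus.
Qed.

Definition clamp (a b t : R) := Rmin (Rmax t a) b.

Lemma clamp_in a b t : a <= b -> a <= clamp a b t <= b.
Proof. by rewrite /clamp => ab; split; [apply: Rmin_glb => //; exact: Rmax_r | exact: Rmin_r]. Qed.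

Lemma clamp_id a b t : a <= t <= b -> clamp a b t = t.
Proof. by rewrite /clamp => tab; rewrite Rmax_left ?Rmin_left; lra. Qed.

Lemma clamp_lipschitz a b s t : a <= b -> Rabs (clamp a b s - clamp a b t) <= Rabs (s - t).
Proof. by rewrite /clamp /Rmin /Rmax => ab; repeat destruct Rle_dec; split_Rabs; lra. Qed.

Lemma continuous_clamp_comp a b phi : a <= b -> cont_within (fun t => a <= t <= b) phi ->
  forall t, continuous (fun s => phi (clamp a b s)) t.
Proof.
move=> ab phic t; apply/continuousP => eps e0.
have [d [d0 Hd]] := phic (clamp a b t) (clamp_in a b t ab) eps e0.
exists d; split => // y yt; apply: Hd; first exact: clamp_in.
exact: Rle_lt_trans (clamp_lipschitz _ _ _ _ ab) yt.
Qed.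

Lemma is_derive_clamp_comp a b (phi : R -> R) t l : a < t < b -> is_derive phi t l ->
  is_derive (fun s => phi (clamp a b s)) t l.
Proof.
move=> tab; apply: is_derive_ext_loc.
have d0 : 0 < Rmin (t - a) (b - t) by apply: Rmin_glb_lt; lra.
exists (mkposreal _ d0) => s /=; rewrite /ball /= /AbsRing_ball /abs /minus /plus /opp /= => st.
have := Rmin_l (t - a) (b - t); have := Rmin_r (t - a) (b - t).
by move=> *; rewrite clamp_id //; split_Rabs; lra.
Qed.

Lemma finite_min_delta {p} (P : 'I_p -> R -> Prop) :
  (forall c d d', 0 < d' <= d -> P c d -> P c d') ->
  (forall c, exists d, 0 < d /\ P c d) -> exists d, 0 < d /\ forall c, P c d.
Proof.
move=> Pmono H.
suff [d [d0 Hd]] : exists d, 0 < d /\ forall c, List.In c (enum 'I_p) -> P c d.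
  by exists d; split => // c; apply: Hd; apply/In_mem/mem_enum.
elim: (enum 'I_p) => [|c L [d [d0 Hd]]]; first by exists 1; split => //; lra.
have [d' [d'0 Hd']] := H c; exists (Rmin d d'); split; first exact: Rmin_glb_lt.
have := Rmin_l d d'; have := Rmin_r d d'; have := Rmin_glb_lt _ _ _ d0 d'0.
move=> m0 m1 m2 c' /= [<- | cL].
- by apply: Pmono Hd'; lra.
- by apply: Pmono (Hd c' cL); lra.
Qed.

Lemma cont_on_subset {p} D D' (y : R -> vec p) :
  (forall t, D' t -> D t) -> cont_on D y -> cont_on D' y.
Proof.
move=> D'D H t D't eps e0; have [d [d0 Hd]] := H t (D'D t D't) eps e0.
by exists d; split => // s D's; apply: Hd (D'D s D's).
Qed.

Lemma cont_on_coord {p} D (x : R -> vec p) c : cont_on D x -> cont_within D (fun r => x r c).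
Proof.
move=> xc t Dt eps e0; have [d [d0 Hd]] := xc t Dt eps e0; exists d; split => // s Ds st.
exact: Rle_lt_trans (Rabs_coord_le_vnorm (vsub (x s) (x t)) c) (Hd s Ds st).
Qed.

Lemma cont_on_of_coord {p} D (F : R -> vec p) : (forall c, cont_within D (fun r => F r c)) -> cont_on D F.
Proof.
move=> Fc t Dt eps e0; have p0 := pos_INR p.
set e := eps / (INR p + 1).
have e_0 : 0 < e by apply: Rdiv_lt_0_compat; lra.
have [|c|d [d0 Hd]] :=
  finite_min_delta (fun c d => forall s, D s -> Rabs (s - t) < d -> Rabs (F s c - F t c) < e).
- by move=> c d d' dd' Hd s Ds st; apply: Hd => //; lra.
- exact: Fc.
exists d; split => // s Ds st.
apply: Rle_lt_trans (vnorm_le_l1 _) _; apply: Rle_lt_trans (rsum_le_const _ e _) _.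
  by move=> c; apply: Rlt_le; apply: Hd.
have -> : INR p * e = eps - e by rewrite /e; field; lra.
lra.
Qed.

Lemma cont_on_const {p} D (v : vec p) : cont_on D (fun _ => v).
Proof. by move=> t _ eps e0; exists 1; split => [|s _ _]; [lra | rewrite vsubvv vnorm0]. Qed.

Lemma cont_on_comp2 {p q} (F : vec p -> vec q -> R) D (x : R -> vec p) (y : R -> vec q) :
  vcont2 F -> cont_on D x -> cont_on D y -> cont_within D (fun r => F (x r) (y r)).
Proof.
move=> Fc xc yc t Dt eps e0.
have [d [d0 Hd]] := Fc (x t) (y t) eps e0.
have [d1 [d10 H1]] := xc t Dt d d0; have [d2 [d20 H2]] := yc t Dt d d0.
exists (Rmin d1 d2); split; first exact: Rmin_glb_lt.
have := Rmin_l d1 d2; have := Rmin_r d1 d2.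
by move=> m1 m2 s Ds st; apply: Hd; [apply: H1 | apply: H2] => //; lra.
Qed.

(** * Smooth maps near a point *)

Definition unit_vec {p} (c : 'I_p) : vec p := fun i => if i == c then 1 else 0.

Lemma vadd_vscal0 {p} (w v : vec p) : vadd w (vscal 0 v) = w.
Proof. by apply: functional_extensionality => i; rewrite /vadd /vscal; ring. Qed.

Lemma vadd_vscal_vzero {p} (y : vec p) h : vadd y (vscal h vzero) = y.
Proof. by apply: functional_extensionality => i; rewrite /vadd /vscal /vzero; ring. Qed.

Lemma vadd_vscal_plus {p} (x v : vec p) h0 h :
  vadd (vadd x (vscal h0 v)) (vscal h v) = vadd x (vscal (h0 + h) v).
Proof. by apply: functional_extensionality => i; rewrite /vadd /vscal; ring. Qed.

Lemma smooth2_is_derive_line {p q} (F : vec p -> vec q -> R) v w x y h0 : smooth2 F ->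
  is_derive (fun h => F (vadd x (vscal h v)) (vadd y (vscal h w))) h0
    (dd ((v, w) :: nil) F (vadd x (vscal h0 v)) (vadd y (vscal h0 w))).
Proof.
move=> Fs /=; set x' := vadd x (vscal h0 v); set y' := vadd y (vscal h0 w).
set psi := fun h => F (vadd x' (vscal h v)) (vadd y' (vscal h w)).
have psi_d : is_derive psi 0 (Derive psi 0) by apply: Derive_correct; exact: (Fs nil).2.
have shift_d : is_derive (fun s => s - h0) h0 1.
  have := is_derive_minus _ _ h0 _ _ (is_derive_id h0) (is_derive_const h0 h0).
  by rewrite /minus /plus /opp /zero /one /= Ropp_0 Rplus_0_r.
have := is_derive_comp psi (fun s => s - h0) h0 (Derive psi 0) 1.
rewrite Rminus_diag scal_one => /(_ psi_d shift_d).
apply: is_derive_ext => s; rewrite /psi /x' /y' !vadd_vscal_plus.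
by rewrite (_ : h0 + (s - h0) = s) //; ring.
Qed.

Lemma MVT_Rabs_le (phi dphi : R -> R) a M :
  (forall h, is_derive phi h (dphi h)) ->
  (forall h, Rmin 0 a <= h <= Rmax 0 a -> Rabs (dphi h) <= M) ->
  Rabs (phi a - phi 0) <= M * Rabs a.
Proof.
move=> phi_d dphi_le.
have [h _|h _|xi [xi_in ->]] := MVT_gen phi 0 a dphi; first exact: phi_d.
- by apply/continuity_pt_filterlim; apply: ex_derive_continuous; exists (dphi h).
rewrite Rminus_0_r Rabs_mult; apply: Rmult_le_compat_r; [exact: Rabs_pos | exact: dphi_le].
Qed.

(* Move from [z0] to [z] one coordinate at a time: every point on the way is
   coordinatewise between [z0] and [z], hence no farther from [z0] than [z]. *)
Lemma partials_lipschitz {p} (G : vec p -> R) (Dc : 'I_p -> vec p -> R) z0 z M :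
  (forall c w h, is_derive (fun h => G (vadd w (vscal h (unit_vec c)))) h
                   (Dc c (vadd w (vscal h (unit_vec c))))) ->
  (forall c w, vnorm (vsub w z0) <= vnorm (vsub z z0) -> Rabs (Dc c w) <= M) ->
  Rabs (G z - G z0) <= INR p * M * vnorm (vsub z z0).
Proof.
move=> G_d Dc_le; set N := vnorm (vsub z z0).
pose mix (S : seq 'I_p) := fun i => if i \in S then z i else z0 i.
suff H S : uniq S -> Rabs (G (mix S) - G z0) <= INR (size S) * M * N.
  have := H (enum 'I_p) (enum_uniq _); rewrite size_enum_ord.
  by rewrite (_ : mix (enum 'I_p) = z) //; apply: functional_extensionality => i; rewrite /mix mem_enum.
elim: S => [|c S IH].
  by rewrite /= (_ : mix [::] = z0) ?Rminus_diag ?Rabs_R0; [lra | apply: functional_extensionality].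
rewrite cons_uniq => /andP [cS uS]; set a := z c - z0 c.
have mix_cons : mix (c :: S) = vadd (mix S) (vscal a (unit_vec c)).
  apply: functional_extensionality => i; rewrite /mix /vadd /vscal /unit_vec in_cons.
  by case: eqP => [->|_] /=; [rewrite (negbTE cS) /a; ring | rewrite Rmult_0_r Rplus_0_r].
have step : Rabs (G (mix (c :: S)) - G (mix S)) <= M * Rabs a.
  rewrite mix_cons -{2}(vadd_vscal0 (mix S) (unit_vec c)).
  apply: (MVT_Rabs_le (fun h => G (vadd (mix S) (vscal h (unit_vec c))))
                      (fun h => Dc c (vadd (mix S) (vscal h (unit_vec c))))) => [h|h h_in].
    exact: G_d.
  apply: Dc_le; apply: vnorm_mono => i; rewrite /vsub /vadd /vscal /unit_vec /mix.
  case: eqP => [->|_].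
  - rewrite (negbTE cS) (_ : z0 c + h * 1 - z0 c = h); last ring.
    by move: h_in; rewrite /a /Rmin /Rmax; repeat case: Rle_dec; move=> *; split_Rabs; lra.
  - rewrite Rmult_0_r Rplus_0_r; case: (i \in S); first lra.
    by rewrite Rminus_diag Rabs_R0; exact: Rabs_pos.
have M0 : 0 <= M := Rle_trans _ _ _ (Rabs_pos _) (Dc_le c z (Rle_refl _)).
have aN : Rabs a <= N by exact: (Rabs_coord_le_vnorm (vsub z z0) c).
have := IH uS; rewrite (_ : size (c :: S) = (size S).+1) // S_INR => IH'.
have := Rabs_triang (G (mix (c :: S)) - G (mix S)) (G (mix S) - G z0).
rewrite (_ : G (mix (c :: S)) - G (mix S) + (G (mix S) - G z0) = G (mix (c :: S)) - G z0); last ring.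
have : M * Rabs a <= M * N by apply: Rmult_le_compat_l.
lra.
Qed.

Lemma vcont2_family_locally_bounded {p q r} (G : 'I_r -> vec p -> vec q -> R) x0 y0 :
  (forall c, vcont2 (G c)) -> exists d, 0 < d /\ exists M, 0 <= M /\ forall c x y,
    vnorm (vsub x x0) < d -> vnorm (vsub y y0) < d -> Rabs (G c x y) <= M.
Proof.
move=> Gc.
have [|c|d [d0 Hd]] := finite_min_delta (fun c d => forall x y,
    vnorm (vsub x x0) < d -> vnorm (vsub y y0) < d -> Rabs (G c x y - G c x0 y0) < 1).
- by move=> c d d' dd' Hd x y hx hy; apply: Hd; lra.
- by apply: Gc; lra.
set M := rsum (fun c => Rabs (G c x0 y0) + 1).
have terms_ge0 c : 0 <= Rabs (G c x0 y0) + 1 by have := Rabs_pos (G c x0 y0); lra.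
exists d; split => //; exists M; split; first exact: rsum_ge0.
move=> c x y hx hy; have := Hd c x y hx hy; have := rsum_ge_term _ c terms_ge0.
by have := Rabs_triang_inv (G c x y) (G c x0 y0); rewrite -/M; lra.
Qed.

Lemma smooth2_locally_lipschitz {p q} (F : vec p -> vec q -> R) x0 y0 : smooth2 F ->
  exists d, 0 < d /\ exists L, 0 <= L /\ forall x y,
    vnorm (vsub x x0) < d -> vnorm (vsub y y0) < d ->
    Rabs (F x y - F x0 y0) <= L * (vnorm (vsub x x0) + vnorm (vsub y y0)).
Proof.
move=> Fs.
have [d1 [d10 [M1 [M10 HM1]]]] :=
  vcont2_family_locally_bounded (fun c => dd ((unit_vec c, vzero) :: nil) F) x0 y0 (fun c => (Fs _).1).
have [d2 [d20 [M2 [M20 HM2]]]] :=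
  vcont2_family_locally_bounded (fun c => dd ((vzero, unit_vec c) :: nil) F) x0 y0 (fun c => (Fs _).1).
exists (Rmin d1 d2); split; first exact: Rmin_glb_lt.
have p0 := pos_INR p; have q0 := pos_INR q.
exists (INR p * M1 + INR q * M2); split.
  by apply: Rplus_le_le_0_compat; apply: Rmult_le_pos.
move=> x y hx hy; have := Rmin_l d1 d2; have := Rmin_r d1 d2 => m2 m1.
have x_step : Rabs (F x y0 - F x0 y0) <= INR p * M1 * vnorm (vsub x x0).
  apply: (partials_lipschitz (F^~ y0) (fun c w => dd ((unit_vec c, vzero) :: nil) F w y0)).
  - move=> c w h; have := smooth2_is_derive_line F (unit_vec c) vzero w y0 h Fs.
    by rewrite !vadd_vscal_vzero; apply: is_derive_ext => t; rewrite vadd_vscal_vzero.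
  - by move=> c w hw; apply: HM1; rewrite ?vsubvv ?vnorm0; lra.
have y_step : Rabs (F x y - F x y0) <= INR q * M2 * vnorm (vsub y y0).
  apply: (partials_lipschitz (F x) (fun c w => dd ((vzero, unit_vec c) :: nil) F x w)).
  - move=> c w h; have := smooth2_is_derive_line F vzero (unit_vec c) x w h Fs.
    by rewrite !vadd_vscal_vzero; apply: is_derive_ext => t; rewrite vadd_vscal_vzero.
  - by move=> c w hw; apply: HM2; lra.
have := Rabs_triang (F x y - F x y0) (F x y0 - F x0 y0).
rewrite (_ : F x y - F x y0 + (F x y0 - F x0 y0) = F x y - F x0 y0); last ring.
have := vnorm_ge0 (vsub x x0); have := vnorm_ge0 (vsub y y0) => ny nx.
have : 0 <= INR p * M1 * vnorm (vsub y y0) by apply: Rmult_le_pos => //; apply: Rmult_le_pos.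
have : 0 <= INR q * M2 * vnorm (vsub x x0) by apply: Rmult_le_pos => //; apply: Rmult_le_pos.
lra.
Qed.

Lemma finite_delta_bound {r} (P : 'I_r -> R -> R -> Prop) :
  (forall c d d' L L', 0 < d' <= d -> L <= L' -> P c d L -> P c d' L') ->
  (forall c, exists d, 0 < d /\ exists L, 0 <= L /\ P c d L) ->
  exists d, 0 < d /\ exists L, 0 <= L /\ forall c, P c d L.
Proof.
move=> Pmono H.
have [|c|d [d0 Hd]] := finite_min_delta (fun c d => exists L, 0 <= L /\ P c d L).
- by move=> c d d' dd' [L [L0 HL]]; exists L; split => //; apply: Pmono HL => //; lra.
- exact: H.
pose Lc c := proj1_sig (constructive_indefinite_description _ (Hd c)).
have HL c : 0 <= Lc c /\ P c d (Lc c) by rewrite /Lc; case: (constructive_indefinite_description _ _).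
exists d; split => //; exists (rsum Lc); split; first by apply: rsum_ge0 => c; case: (HL c).
move=> c; case: (HL c) => L0 PL; apply: Pmono PL; first lra.
by apply: rsum_ge_term => c'; case: (HL c').
Qed.

Definition lin_bounded_near0 {n m} (d L : R) (Phi : vec n -> vec m -> R) :=
  forall x u, vnorm x < d -> vnorm u < d -> Rabs (Phi x u) <= L * (vnorm x + vnorm u).

Lemma lin_bounded_near0_mono {n m} (Phi : vec n -> vec m -> R) d d' L L' :
  0 < d' <= d -> L <= L' -> lin_bounded_near0 d L Phi -> lin_bounded_near0 d' L' Phi.
Proof.
move=> dd' LL' H x u hx hu; apply: Rle_trans (H x u _ _) _; try lra.
by apply: Rmult_le_compat_r => //; have := vnorm_ge0 x; have := vnorm_ge0 u; lra.
Qed.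

Lemma smooth2_lin_bounded_near0 {n m} (Phi : vec n -> vec m -> R) :
  smooth2 Phi -> Phi vzero vzero = 0 ->
  exists d, 0 < d /\ exists L, 0 <= L /\ lin_bounded_near0 d L Phi.
Proof.
move=> Phis Phi0; have [d [d0 [L [L0 HL]]]] := smooth2_locally_lipschitz Phi vzero vzero Phis.
exists d; split => //; exists L; split => // x u hx hu.
by have := HL x u; rewrite !vsubv0 Phi0 Rminus_0_r; apply.
Qed.

Section ClosedLoopNearZero.
Variables (n m l : nat) (f : vec n -> vec m -> vec n) (g : vec n -> vec m -> mat n l)
  (k : vec l -> vec n -> vec m).
Hypothesis hf : forall j, smooth2 (fun x u => f x u j).
Hypothesis hg : forall j c, smooth2 (fun x u => g x u j c).
Hypothesis hk : forall j, smooth2 (fun th x => k th x j).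
Hypothesis hf0 : f vzero vzero = vzero.
Hypothesis hg0 : g vzero vzero = mzero.
Hypothesis hk0 : forall th, k th vzero = vzero.

Lemma feedback_lin_bound th : exists d, 0 < d /\ exists L, 0 <= L /\
  forall z, vnorm z < d -> vnorm (k th z) <= L * vnorm z.
Proof.
have [|j|d [d0 [L [L0 HL]]]] := finite_delta_bound
    (fun j d L => forall z, vnorm z < d -> Rabs (k th z j) <= L * vnorm z).
- move=> c d d' L L' dd' LL' H z hz; apply: Rle_trans (H z ltac:(lra)) _.
  by apply: Rmult_le_compat_r => //; exact: vnorm_ge0.
- have [d [d0 [L [L0 HL]]]] := smooth2_locally_lipschitz _ th vzero (hk j).
  exists d; split => //; exists L; split => // z hz.
  have := HL th z; rewrite vsubvv vnorm0 vsubv0 hk0 /vzero Rminus_0_r Rplus_0_l; apply => //.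
exists d; split => //; exists (INR m * L); split; first by apply: Rmult_le_pos => //; exact: pos_INR.
move=> z hz; apply: Rle_trans (vnorm_le_l1 _) _.
by rewrite Rmult_assoc; apply: rsum_le_const => j; apply: HL.
Qed.

Lemma plant_lin_bound theta : exists d, 0 < d /\ exists L, 0 <= L /\
  forall j, lin_bounded_near0 d L (fun x u => plant f g x u theta j).
Proof.
have [|j|df [df0 [Lf [Lf0 Hf]]]] :=
  finite_delta_bound (fun j d L => lin_bounded_near0 d L (fun x u => f x u j)).
- by move=> c d d' L L'; apply: lin_bounded_near0_mono.
- by apply: smooth2_lin_bounded_near0 => //; rewrite hf0.
have [|j|dg [dg0 [Lg [Lg0 Hg]]]] :=
  finite_delta_bound (fun j d L => forall c, lin_bounded_near0 d L (fun x u => g x u j c)).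
- by move=> j d d' L L' dd' LL' H c; apply: lin_bounded_near0_mono (H c).
- apply: (finite_delta_bound (fun c d L => lin_bounded_near0 d L (fun x u => g x u j c))).
    by move=> c d d' L L'; apply: lin_bounded_near0_mono.
  by move=> c; apply: smooth2_lin_bounded_near0 => //; rewrite hg0.
set Th := rsum (fun c => Rabs (theta c)).
have Th0 : 0 <= Th by apply: rsum_ge0 => c; exact: Rabs_pos.
exists (Rmin df dg); split; first exact: Rmin_glb_lt.
exists (Lf + Lg * Th); split; first nra.
move=> j x u hx hu; have := Rmin_l df dg; have := Rmin_r df dg => m2 m1.
have xu0 : 0 <= vnorm x + vnorm u by have := vnorm_ge0 x; have := vnorm_ge0 u; lra.
rewrite /plant /vadd /mvmul; apply: Rle_trans (Rabs_triang _ _) _.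
have f_le := Hf j x u ltac:(lra) ltac:(lra).
have g_le : Rabs (rsum (fun c => g x u j c * theta c)) <= Lg * (vnorm x + vnorm u) * Th.
  apply: Rle_trans (Rabs_rsum_le _) _; rewrite /Th -rsum_scal; apply: rsum_le => c.
  rewrite Rabs_mult; apply: Rmult_le_compat_r; first exact: Rabs_pos.
  by apply: Hg; lra.
nra.
Qed.

Lemma cl_field_lin_bound th theta : exists d, 0 < d /\ exists L, 0 <= L /\
  forall z, vnorm z < d -> forall j, Rabs (plant f g z (k th z) theta j) <= L * vnorm z.
Proof.
have [dk [dk0 [Lk [Lk0 Hk]]]] := feedback_lin_bound th.
have [d [d0 [L [L0 HL]]]] := plant_lin_bound theta.
have dLk0 : 0 < d / (Lk + 1) by apply: Rdiv_lt_0_compat; lra.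
exists (Rmin dk (d / (Lk + 1))); split; first exact: Rmin_glb_lt.
exists (L * (1 + Lk)); split; first nra.
move=> z hz j; have := Rmin_l dk (d / (Lk + 1)); have := Rmin_r dk (d / (Lk + 1)) => m2 m1.
have z0 := vnorm_ge0 z; have kz := Hk z ltac:(lra).
have zLk : vnorm z * (Lk + 1) < d.
  have : d / (Lk + 1) * (Lk + 1) = d by field; lra.
  have : vnorm z < d / (Lk + 1) by lra.
  by move/(Rmult_lt_compat_r (Lk + 1)); lra.
by apply: Rle_trans (HL j z (k th z) _ _) _; nra.
Qed.

End ClosedLoopNearZero.

(** * Mean value arguments *)

Lemma is_derive_rsum {p} (F : 'I_p -> R -> R) (D : 'I_p -> R) t :
  (forall j, is_derive (F j) t (D j)) -> is_derive (fun s => rsum (fun j => F j s)) t (rsum D).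
Proof.
apply: (rsum_fun_ind (fun f v => is_derive f t v)); first exact: is_derive_const.
by move=> f g a b fa gb; apply: (is_derive_plus f g).
Qed.

Lemma MVT_cont_within (h dh : R -> R) a b : a < b -> cont_within (fun r => a <= r <= b) h ->
  (forall r, a < r < b -> is_derive h r (dh r)) ->
  exists c, a <= c <= b /\ h b - h a = dh c * (b - a).
Proof.
move=> ab hc h_d.
have [r|r|c] := MVT_gen (fun s => h (clamp a b s)) a b dh; rewrite Rmin_left ?Rmax_right; try lra.
- by move=> r_in; apply: is_derive_clamp_comp => //; apply: h_d.
- by move=> _; apply/continuity_pt_filterlim; apply: continuous_clamp_comp => //; lra.
by move=> [c_in]; rewrite !clamp_id; try lra; exists c.
Qed.

Lemma cont_within_zero_closure (phi : R -> R) a b : a < b -> cont_within (fun r => a <= r <= b) phi ->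
  (forall r, a < r < b -> phi r = 0) -> forall t, a <= t <= b -> phi t = 0.
Proof.
move=> ab phic phi0 t t_in; apply: NNPP => phit.
have [d [d0 Hd]] := phic t t_in _ (Rabs_pos_lt _ phit).
have e1 := Rmin_l (d / 2) ((b - a) / 2); have e2 := Rmin_r (d / 2) ((b - a) / 2).
have e0 : 0 < Rmin (d / 2) ((b - a) / 2) by apply: Rmin_glb_lt; lra.
set e := Rmin (d / 2) ((b - a) / 2) in e0 e1 e2 *.
set r := if Rle_dec (t + e) b then t + e / 2 else t - e / 2.
have [r_in rt] : a < r < b /\ Rabs (r - t) < d.
  by rewrite /r; case: Rle_dec => /= h; (split; [| split_Rabs]); lra.
by have := Hd r ltac:(lra) rt; rewrite phi0 // Rminus_0_l Rabs_Ropp; lra.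
Qed.

Lemma is_derive_exp_lin K t : is_derive (fun t => exp (- K * t)) t (- K * exp (- K * t)).
Proof.
have := is_derive_comp exp (fun t => - K * t) t (exp (- K * t)) (- K).
rewrite /scal /= /mult /=; apply; first exact: is_derive_exp.
by have := is_derive_scal (fun t => t) t (- K) 1 (is_derive_id t); rewrite Rmult_1_r.
Qed.

Section ZeroSolution.
Variables (n : nat) (x : R -> vec n) (F : vec n -> vec n) (d L : R).
Hypothesis L0 : 0 <= L.
Hypothesis F_lin : forall z, vnorm z < d -> forall j, Rabs (F z j) <= L * vnorm z.

Lemma energy_rate_le z : vnorm z < d -> rsum (fun j => 2 * z j * F z j) <= 2 * INR n * L * vnorm z ^ 2.
Proof.
move=> zd; apply: Rle_trans (rsum_le_const _ (2 * L * vnorm z ^ 2) _) _; last by right; ring.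
move=> j.
have := F_lin z zd j; have := Rabs_coord_le_vnorm z j; have := Rabs_pos (z j).
have := vnorm_ge0 z; have := Rle_abs (z j * F z j); rewrite Rabs_mult => *.
have : Rabs (z j) * Rabs (F z j) <= vnorm z * (L * vnorm z).
  by apply: Rmult_le_compat; try apply: Rabs_pos.
nra.
Qed.

(* Gronwall: [t |-> |x t|^2 exp (- 2 n L t)] is nonincreasing while [x] stays in the ball. *)
Lemma small_solution_stays_zero a b : a <= b -> cont_on (fun t => a <= t <= b) x ->
  (forall t, a < t < b -> vderiv x t (F (x t))) ->
  (forall t, a <= t <= b -> vnorm (x t) < d) ->
  x a = vzero -> forall t, a <= t <= b -> x t = vzero.
Proof.
move=> ab xc x_d x_small xa t t_in.
case: (Req_dec t a) => [-> // | tNa].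
set K := 2 * INR n * L.
set w := fun t => rsum (fun j => x t j ^ 2).
set h := fun t => w t * exp (- K * t).
set dh := fun t => rsum (fun j => 2 * x t j * F (x t) j) * exp (- K * t) + w t * (- K * exp (- K * t)).
have h_c : cont_within (fun r => a <= r <= t) h.
  apply: cont_within_mult; last by apply: cont_within_of_continuous => r; apply: ex_derive_continuous;
    exists (- K * exp (- K * r)); apply: is_derive_exp_lin.
  have xj_c j : cont_within (fun r => a <= r <= t) (fun r => x r j).
    by apply: cont_on_coord; apply: cont_on_subset xc => r; lra.
  apply: cont_within_rsum => j; apply: cont_within_mult => //.
  by apply: cont_within_mult => //; exact: cont_within_const.
have h_d r : a < r < t -> is_derive h r (dh r).
  move=> r_in; apply: (is_derive_mult w (fun t => exp (- K * t))); last exact: Rmult_comm.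
    apply: is_derive_rsum => j; have := is_derive_pow _ 2 r _ (x_d r ltac:(lra) j).
    by rewrite (_ : INR 2 * _ * _ = 2 * x r j * F (x r) j) //=; ring.
  exact: is_derive_exp_lin.
have [c [c_in ht]] := MVT_cont_within h dh a t ltac:(lra) h_c h_d.
have dh_le : dh c <= 0.
  have := energy_rate_le (x c) (x_small c ltac:(lra)); have := exp_pos (- K * c).
  by rewrite /dh /w -vnorm_sq; have := pow2_ge_0 (vnorm (x c)); rewrite /K; nra.
have ha : h a = 0 by rewrite /h /w xa /vzero (rsum_ext _ (fun _ => 0)) ?rsum0; [ring | move=> j; ring].
apply: vnorm_eq0; have : w t <= 0.
  by have := exp_pos (- K * t); move: ht; rewrite ha /h; nra.
by rewrite /w -vnorm_sq; have := vnorm_ge0 (x t); nra.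
Qed.

(* The first time after which [x] leaves [0] cannot be smaller than [b]: just after it,
   [x] is still in the ball of radius [d]. *)
Lemma zero_solution_unique a b : a <= b -> cont_on (fun t => a <= t <= b) x ->
  (forall t, a < t < b -> vderiv x t (F (x t))) -> 0 < d ->
  x a = vzero -> forall t, a <= t <= b -> x t = vzero.
Proof.
move=> ab xc x_d d0 xa.
pose E s := a <= s <= b /\ forall r, a <= r <= s -> x r = vzero.
have Ea : E a by split => [|r ?]; [lra | have -> : r = a by lra].
have E_bounded : bound E by exists b => s [? _]; lra.
have [s0 [s0_ub s0_least]] := completeness E E_bounded (ex_intro _ a Ea).
have as0 : a <= s0 := s0_ub a Ea.
have s0b : s0 <= b by apply: s0_least => s [? _]; lra.
have below r : a <= r < s0 -> x r = vzero.
  move=> r_in; apply: NNPP => xr; suff : s0 <= r by lra.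
  by apply: s0_least => s [s_in Hs]; apply: Rnot_lt_le => rs; apply/xr/Hs; lra.
have xs0 : x s0 = vzero.
  case: (Req_dec s0 a) => [-> // | s0Na]; apply: functional_extensionality => j.
  apply: (cont_within_zero_closure (fun r => x r j) a s0) => [||r r_in|]; try lra.
    by apply: cont_on_coord; apply: cont_on_subset xc => r; lra.
  by rewrite below //; lra.
have Es0 r : a <= r <= s0 -> x r = vzero.
  by move=> r_in; case: (Req_dec r s0) => [-> // | rNs0]; apply: below; lra.
move=> t t_in; case: (Req_dec s0 b) => [s0b' | s0Nb]; first by apply: Es0; lra.
have [e [e0 He]] := xc s0 (conj as0 s0b) d d0.
set t2 := Rmin (s0 + e / 2) b.
have := Rmin_l (s0 + e / 2) b; have := Rmin_r (s0 + e / 2) b; rewrite -/t2 => t2b t2e.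
have s0t2 : s0 < t2 by apply: Rmin_glb_lt; lra.
have zero_s0_t2 : forall r, s0 <= r <= t2 -> x r = vzero.
  apply: small_solution_stays_zero => //; first lra.
  - by apply: cont_on_subset xc => r; lra.
  - by move=> r r_in; apply: x_d; lra.
  - move=> r r_in; have := He r ltac:(lra) ltac:(rewrite Rabs_pos_eq; lra).
    by rewrite xs0 vsubv0.
suff : t2 <= s0 by lra.
apply: s0_ub; split => [|r r_in]; first lra.
by case: (Rle_or_lt r s0) => rs0; [apply: Es0 | apply: zero_s0_t2]; lra.
Qed.

End ZeroSolution.

Lemma at_right_limP (phi : R -> R) l : filterlim phi (at_right 0) (locally l) ->
  forall eps, 0 < eps -> exists d, 0 < d /\ forall h, 0 < h < d -> Rabs (phi h - l) < eps.
Proof.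
move=> phil eps e0.
have [d Hd] := phil _ (locally_ball l (mkposreal eps e0)).
exists d; split => [|h h_in]; first exact: cond_pos.
apply: Hd; last lra.
by rewrite /ball /= /AbsRing_ball /abs /minus /plus /opp /= Ropp_0 Rplus_0_r Rabs_pos_eq; lra.
Qed.

(* Left of [t0] the difference quotients are values of [F] by the mean value theorem. *)
Lemma is_derive_of_right_quotient (phi F : R -> R) t1 t0 : t1 < t0 ->
  cont_within (fun r => t1 <= r <= t0) phi -> (forall r, t1 < r < t0 -> is_derive phi r (F r)) ->
  cont_within (fun r => t1 <= r <= t0) F ->
  filterlim (fun h => (phi (t0 + h) - phi t0) / h) (at_right 0) (locally (F t0)) ->
  is_derive phi t0 (F t0).
Proof.
move=> t10 phic phi_d Fc right_q; apply/is_derive_Reals => eps e0.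
have [d1 [d10 H1]] := at_right_limP _ _ right_q eps e0.
have [d3 [d30 H3]] := Fc t0 ltac:(lra) eps e0.
have := Rmin_l d1 (Rmin d3 (t0 - t1)); have := Rmin_r d1 (Rmin d3 (t0 - t1)).
have := Rmin_l d3 (t0 - t1); have := Rmin_r d3 (t0 - t1).
have d0 : 0 < Rmin d1 (Rmin d3 (t0 - t1)) by apply: Rmin_glb_lt => //; apply: Rmin_glb_lt; lra.
move=> m1 m2 m3 m4; exists (mkposreal _ d0) => h h0 /= hd.
case: (Rlt_or_le 0 h) => h_sign; first by apply: H1; split => //; move: hd; rewrite Rabs_pos_eq; lra.
rewrite Rabs_left in hd; last lra.
have phic' : cont_within (fun r => t0 + h <= r <= t0) phi by apply: cont_within_subset phic => r; lra.
have [c [c_in e]] :=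
  MVT_cont_within phi F (t0 + h) t0 ltac:(lra) phic' (fun r r_in => phi_d r ltac:(lra)).
have -> : phi (t0 + h) - phi t0 = F c * h.
  by rewrite (_ : F c * h = - (F c * (t0 - (t0 + h)))); [lra | ring].
rewrite /Rdiv Rmult_assoc Rinv_r ?Rmult_1_r; last lra.
by apply: H3; [lra | split_Rabs; lra].
Qed.

(** * Double integrals *)

Lemma is_RInt_rsum {p} (F : 'I_p -> R -> R) (I : 'I_p -> R) a b :
  (forall j, is_RInt (F j) a b (I j)) -> is_RInt (fun s => rsum (fun j => F j s)) a b (rsum I).
Proof.
apply: (rsum_fun_ind (fun f v => is_RInt f a b v)).
- by have := is_RInt_const a b 0; rewrite /scal /= /mult /= Rmult_0_r.
- by move=> f g v w fv gw; apply: (is_RInt_plus f g).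
Qed.

Lemma RInt_rsum {p} (F : 'I_p -> R -> R) a b : (forall j, ex_RInt (F j) a b) ->
  RInt (fun s => rsum (fun j => F j s)) a b = rsum (fun j => RInt (F j) a b).
Proof. by move=> Fi; apply: is_RInt_unique; apply: is_RInt_rsum => j; apply: RInt_correct. Qed.

Lemma ex_RInt_continuous_all (f : R -> R) a b : (forall t, continuous f t) -> ex_RInt f a b.
Proof. by move=> fc; apply: ex_RInt_continuous => z _; exact: fc. Qed.

Lemma continuous_Rmult (f g : R -> R) t :
  continuous f t -> continuous g t -> continuous (fun s => f s * g s) t.
Proof. exact: continuous_mult. Qed.

Lemma continuous_rsum_scal {p} (v : 'I_p -> R) (F : 'I_p -> R -> R) t :
  (forall c t, continuous (F c) t) -> continuous (fun t => rsum (fun c => v c * F c t)) t.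
Proof.
move=> Fc; apply: continuous_of_cont_within; apply: cont_within_rsum => c.
by apply: cont_within_mult; [exact: cont_within_const | exact: cont_within_of_continuous].
Qed.

(* The double integral over [[a, b]^2] of [(A t - A s) * (B t - B s)]. *)
Definition cov_form (A B : R -> R) a b :=
  2 * ((b - a) * RInt (fun s => A s * B s) a b - RInt A a b * RInt B a b).

Section DoubleIntegral.
Variables (A B : R -> R) (a b : R).
Hypothesis Ac : forall t, continuous A t.
Hypothesis Bc : forall t, continuous B t.

Let IA := RInt A a b.
Let IB := RInt B a b.
Let IAB := RInt (fun s => A s * B s) a b.

Let ex_AB : ex_RInt (fun s => A s * B s) a b.
Proof. by apply: ex_RInt_continuous_all => s; apply: continuous_Rmult. Qed.

Lemma is_RInt_diff_prod t : is_RInt (fun s => (A t - A s) * (B t - B s)) a b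
  (A t * B t * (b - a) - A t * IB - B t * IA + IAB).
Proof.
have h1 := is_RInt_const a b (A t * B t).
have h2 := is_RInt_scal B a b (A t) _ (RInt_correct _ _ _ (ex_RInt_continuous_all B a b Bc)).
have h3 := is_RInt_scal A a b (B t) _ (RInt_correct _ _ _ (ex_RInt_continuous_all A a b Ac)).
have := is_RInt_plus _ _ _ _ _ _ (is_RInt_minus _ _ _ _ _ _ (is_RInt_minus _ _ _ _ _ _ h1 h2) h3)
  (RInt_correct _ _ _ ex_AB).
rewrite /scal /= /mult /= /minus /plus /opp /= => H.
apply: is_RInt_ext (_ : is_RInt _ _ _ _) => [s _ | ]; last first.
  by rewrite /IA /IB /IAB (_ : _ + _ = (b - a) * (A t * B t) + - (A t * RInt B a b)
    + - (B t * RInt A a b) + RInt (fun s => A s * B s) a b); [exact: H | ring].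
by rewrite /=; ring.
Qed.

Lemma is_RInt_cov_form : is_RInt (fun t => A t * B t * (b - a) - A t * IB - B t * IA + IAB) a b
  (cov_form A B a b).
Proof.
have h1 := is_RInt_scal _ a b (b - a) _ (RInt_correct _ _ _ ex_AB).
have h2 := is_RInt_scal A a b IB _ (RInt_correct _ _ _ (ex_RInt_continuous_all A a b Ac)).
have h3 := is_RInt_scal B a b IA _ (RInt_correct _ _ _ (ex_RInt_continuous_all B a b Bc)).
have := is_RInt_plus _ _ _ _ _ _ (is_RInt_minus _ _ _ _ _ _ (is_RInt_minus _ _ _ _ _ _ h1 h2) h3)
  (is_RInt_const a b IAB).
rewrite /scal /= /mult /= /minus /plus /opp /= => H.
apply: is_RInt_ext (_ : is_RInt _ _ _ _) => [s _ | ]; last first.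
  by rewrite /cov_form -/IA -/IB -/IAB (_ : 2 * _ = (b - a) * IAB + - (IB * IA)
    + - (IA * IB) + (b - a) * IAB); [exact: H | ring].
by rewrite /=; ring.
Qed.

End DoubleIntegral.

Lemma RInt_RInt_rsum_cov_form {p} (A B : 'I_p -> R -> R) a b :
  (forall j t, continuous (A j) t) -> (forall j t, continuous (B j) t) ->
  RInt (fun t => RInt (fun s => rsum (fun j => (A j t - A j s) * (B j t - B j s))) a b) a b
  = rsum (fun j => cov_form (A j) (B j) a b).
Proof.
move=> Ac Bc; rewrite (RInt_ext _ (fun t => rsum (fun j => A j t * B j t * (b - a)
   - A j t * RInt (B j) a b - B j t * RInt (A j) a b + RInt (fun s => A j s * B j s) a b))).
  by apply: is_RInt_unique; apply: is_RInt_rsum => j; apply: is_RInt_cov_form.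
by move=> t _; apply: is_RInt_unique; apply: is_RInt_rsum => j; apply: is_RInt_diff_prod.
Qed.

Lemma RInt_ge0_eq0 (f : R -> R) a b : a < b -> (forall t, continuous f t) ->
  (forall t, 0 <= f t) -> RInt f a b = 0 -> forall t, a <= t <= b -> f t = 0.
Proof.
move=> ab fc f0 If0 t0 t0_in; case: (f0 t0) => // ft0; exfalso.
have [d [d0 Hd]] := proj1 (continuousP f t0) (fc t0) (f t0 / 2) ltac:(lra).
set c1 := Rmax a (t0 - d / 2); set c2 := Rmin b (t0 + d / 2).
have := Rmax_l a (t0 - d / 2); have := Rmax_r a (t0 - d / 2).
have := Rmin_l b (t0 + d / 2); have := Rmin_r b (t0 + d / 2); rewrite -/c1 -/c2 => m1 m2 m3 m4.
have c12 : c1 < c2 by rewrite /c1 /c2; apply: Rmax_lub_lt; apply: Rmin_glb_lt; lra.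
have fi u v : ex_RInt f u v by apply: ex_RInt_continuous_all.
have : RInt f a b = RInt f a c1 + (RInt f c1 c2 + RInt f c2 b).
  by rewrite -(RInt_Chasles f a c1 b) // -(RInt_Chasles f c1 c2 b).
have : 0 <= RInt f a c1 by apply: RInt_ge_0 => // s _; exact: f0.
have : 0 <= RInt f c2 b by apply: RInt_ge_0 => // s _; exact: f0.
have : (c2 - c1) * (f t0 / 2) <= RInt f c1 c2.
  have := RInt_le (fun _ => f t0 / 2) f c1 c2 (Rlt_le _ _ c12) (ex_RInt_const _ _ _) (fi _ _).
  rewrite RInt_const /scal /= /mult /=; apply => s s_in.
  by have := Hd s ltac:(split_Rabs; lra); split_Rabs; lra.
have : 0 < (c2 - c1) * (f t0 / 2) by apply: Rmult_lt_0_compat; lra.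
lra.
Qed.

Lemma cov_formC A B a b : cov_form A B a b = cov_form B A a b.
Proof.
rewrite /cov_form (RInt_ext (fun s => A s * B s) (fun s => B s * A s)).
  by congr (2 * (_ - _)); exact: Rmult_comm.
by move=> s _; exact: Rmult_comm.
Qed.

Lemma cov_form_rsum_r {p} (A : R -> R) (B : 'I_p -> R -> R) (v : 'I_p -> R) a b :
  (forall t, continuous A t) -> (forall c t, continuous (B c) t) ->
  cov_form A (fun s => rsum (fun c => v c * B c s)) a b = rsum (fun c => v c * cov_form A (B c) a b).
Proof.
move=> Ac Bc; rewrite /cov_form.
have ex_vB c : ex_RInt (fun s => v c * B c s) a b.
  by apply: ex_RInt_continuous_all => s; apply: continuous_Rmult; [exact: continuous_const | exact: Bc].
have ex_vAB c : ex_RInt (fun s => v c * (A s * B c s)) a b.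
  apply: ex_RInt_continuous_all => s; apply: continuous_Rmult; first exact: continuous_const.
  exact: continuous_Rmult.
rewrite (RInt_ext (fun s => A s * rsum (fun c => v c * B c s))
  (fun s => rsum (fun c => v c * (A s * B c s)))); last first.
  by move=> s _; rewrite -rsum_scal; apply: rsum_ext => c; ring.
rewrite !RInt_rsum //.
rewrite (rsum_ext _ (fun c => v c * RInt (fun s => A s * B c s) a b)); last first.
  move=> c; have := RInt_scal (fun s => A s * B c s) a b (v c); rewrite /scal /= /mult /=; apply.
  by apply: ex_RInt_continuous_all => s; apply: continuous_Rmult.
rewrite (rsum_ext (fun c => RInt (fun s => v c * B c s) a b) (fun c => v c * RInt (B c) a b)).
  rewrite [RHS](rsum_ext _ (fun c => 2 * ((b - a) * (v c * RInt (fun s => A s * B c s) a b)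
    - RInt A a b * (v c * RInt (B c) a b)))); last by move=> c; ring.
  by rewrite rsum_scal rsum_minus !rsum_scal.
move=> c; have := RInt_scal (B c) a b (v c); rewrite /scal /= /mult /=; apply.
by apply: ex_RInt_continuous_all.
Qed.

Lemma cov_form_self A a b : a < b -> (forall t, continuous A t) ->
  cov_form A A a b = 2 * (b - a) * RInt (fun s => (A s - RInt A a b / (b - a)) ^ 2) a b.
Proof.
move=> ab Ac; set m := RInt A a b / (b - a).
have ex_A : ex_RInt A a b by exact: ex_RInt_continuous_all.
have ex_AA : ex_RInt (fun s => A s * A s) a b.
  by apply: ex_RInt_continuous_all => s; apply: continuous_Rmult.
rewrite (RInt_ext _ (fun s => plus (plus (A s * A s) (scal (- 2 * m) (A s))) (m ^ 2))); last first.
  by move=> s _; rewrite /plus /scal /= /mult /=; ring.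
rewrite RInt_plus; [|apply: ex_RInt_plus => //; exact: ex_RInt_scal | exact: ex_RInt_const].
rewrite RInt_plus //; last exact: ex_RInt_scal.
rewrite RInt_scal // RInt_const /plus /scal /= /mult /= /cov_form /m; field; lra.
Qed.

Lemma continuous_sq_dev (A : R -> R) m t : continuous A t -> continuous (fun s => (A s - m) ^ 2) t.
Proof.
move=> Ac; have Amc : continuous (fun s => A s - m) t.
  by apply: (continuous_minus A (fun _ => m)) => //; exact: continuous_const.
by apply: (continuous_Rmult _ (fun s => (A s - m) * 1)) => //; apply: continuous_Rmult => //;
  exact: continuous_const.
Qed.

Lemma cov_form_self_ge0 A a b : a < b -> (forall t, continuous A t) -> 0 <= cov_form A A a b.
Proof.
move=> ab Ac; rewrite cov_form_self //; apply: Rmult_le_pos; first lra.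
apply: RInt_ge_0; [lra | | by move=> s _; apply: pow2_ge_0].
by apply: ex_RInt_continuous_all => t; apply: continuous_sq_dev.
Qed.

Lemma cov_form_self_eq0 A a b : a < b -> (forall t, continuous A t) ->
  cov_form A A a b = 0 -> forall t, a <= t <= b -> A t = A a.
Proof.
move=> ab Ac; rewrite cov_form_self //; set m := RInt A a b / (b - a) => cov0 t t_in.
have I0 : RInt (fun s => (A s - m) ^ 2) a b = 0.
  by apply: (Rmult_eq_reg_l (2 * (b - a))); rewrite ?Rmult_0_r //; lra.
have dev0 := RInt_ge0_eq0 _ a b ab (fun t => continuous_sq_dev A m t (Ac t))
  (fun s => pow2_ge_0 _) I0.
have A_m s : a <= s <= b -> A s = m.
  by move=> s_in; apply: NNPP => Asm; apply: (pow_nonzero (A s - m) 2); [lra | exact: dev0].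
by rewrite !A_m //; lra.
Qed.

(* Extending an integrand by [0] on the negative half-line makes [t |-> RInt _ 0 t]
   integrable near every point, hence continuous, including at [t = 0]. *)
Definition cut0 (F : R -> R) r := if Rle_dec 0 r then F r else 0.

Lemma RInt_cut0 F s t : 0 <= s -> 0 <= t -> RInt (cut0 F) s t = RInt F s t.
Proof.
move=> s0 t0; apply: RInt_ext => r r_in; rewrite /cut0; case: Rle_dec => // r0.
by move: r_in; rewrite /Rmin; case: Rle_dec; lra.
Qed.

Lemma ex_RInt_cut0 F : (forall t, 0 <= t -> ex_RInt F 0 t) -> forall a b, ex_RInt (cut0 F) a b.
Proof.
have ex0 c : (forall t, 0 <= t -> ex_RInt F 0 t) -> ex_RInt (cut0 F) 0 c.
  move=> Fi; case: (Rle_lt_dec 0 c) => c0.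
    apply: ex_RInt_ext (Fi c c0) => r r_in; rewrite /cut0; case: Rle_dec => // r0.
    by move: r_in; rewrite Rmin_left ?Rmax_right; lra.
  apply: ex_RInt_swap; apply: ex_RInt_ext (ex_RInt_const c 0 0) => r r_in; rewrite /cut0.
  by case: Rle_dec => // r0; move: r_in; rewrite Rmin_left ?Rmax_right; lra.
by move=> Fi a b; apply: (ex_RInt_Chasles _ a 0); [apply: ex_RInt_swap |]; apply: ex0.
Qed.

Lemma continuous_RInt_cut0 F t : (forall t, 0 <= t -> ex_RInt F 0 t) ->
  continuous (fun t => RInt (cut0 F) 0 t) t.
Proof.
move=> Fi; apply: (continuous_RInt_1 (cut0 F) 0 t); apply: filter_forall => z.
by apply: RInt_correct; apply: ex_RInt_cut0.
Qed.

(** * The hybrid closed loop *)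

Lemma Rbar_min_Glb_Rbar_bounds (S : R -> Prop) t0 t1 :
  Rbar.Finite t1 = Rbar_min (Rbar.Finite t0) (Glb_Rbar S) ->
  t1 <= t0 /\ (forall s, S s -> t1 <= s) /\
  (forall b, (forall s, S s -> b <= s) -> Rmin t0 b <= t1).
Proof.
have [lb glb] := Glb_Rbar_correct S.
case: (Glb_Rbar S) lb glb => [r| |] lb glb //= [->].
- split; first exact: Rmin_l.
  split; first by move=> s Ss; have := Rmin_r t0 r; have := lb s Ss; rewrite /=; lra.
  by move=> b Hb; have := glb (Rbar.Finite b) Hb; rewrite /Rmin /=; do 2 case: Rle_dec; lra.
- split; first lra.
  by split => [s Ss | b _]; [have := lb s Ss | exact: Rmin_l].
Qed.

Definition comp_continuous {n m} (Psi : vec n -> vec m -> R) :=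
  forall D (y : R -> vec n) (v : R -> vec m),
    cont_on D y -> cont_on D v -> cont_within D (fun r => Psi (y r) (v r)).

Lemma comp_continuous_vcont2 {n m} (Psi : vec n -> vec m -> R) : vcont2 Psi -> comp_continuous Psi.
Proof. by move=> Psic D y v yc vc; apply: cont_on_comp2. Qed.

Lemma comp_continuous_plant {n m l} (f : vec n -> vec m -> vec n) (g : vec n -> vec m -> mat n l)
  theta j : (forall j, vcont2 (fun x u => f x u j)) -> (forall j c, vcont2 (fun x u => g x u j c)) ->
  comp_continuous (fun z w => plant f g z w theta j).
Proof.
move=> fc gc D y v yc vc; rewrite /plant /vadd /mvmul.
apply: cont_within_plus; first exact: (cont_on_comp2 (fun x u => f x u j)).
apply: cont_within_rsum => c; apply: cont_within_mult; last exact: cont_within_const.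
exact: (cont_on_comp2 (fun x u => g x u j c)).
Qed.

Lemma cont_on_feedback {n m l} (k : vec l -> vec n -> vec m) th D (y : R -> vec n) :
  (forall j, vcont2 (fun th x => k th x j)) -> cont_on D y -> cont_on D (fun r => k th (y r)).
Proof.
move=> kc yc; apply: cont_on_of_coord => j.
exact: (cont_on_comp2 (fun th x => k th x j) D (fun _ => th) y (kc j) (cont_on_const D th) yc).
Qed.

Section HybridTrajectory.
Variables (n m l : nat) (f : vec n -> vec m -> vec n) (g : vec n -> vec m -> mat n l)
  (k : vec l -> vec n -> vec m) (V Q : vec l -> vec n -> R).
Hypothesis hf : forall j, smooth2 (fun x u => f x u j).
Hypothesis hg : forall j c, smooth2 (fun x u => g x u j c).
Hypothesis hk : forall j, smooth2 (fun th x => k th x j).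
Hypothesis hf0 : f vzero vzero = vzero.
Hypothesis hg0 : g vzero vzero = mzero.
Hypothesis hk0 : forall th, k th vzero = vzero.
Hypothesis hVc : vcont2 V.
Hypothesis hVQ : forall th z, V th z <= Q th z.
Variables (T : R) (Ntil : nat) (a : vec n -> R).
Hypothesis hT : 0 < T.
Hypothesis hNtil : (1 <= Ntil)%nat.
Hypothesis hapd : posdef a.
Variables (theta : vec l) (x : R -> vec n) (u : R -> vec m) (th : R -> vec l) (tau : nat -> R).
Hypothesis hyb : hybrid_sol f g k V Q a T Ntil theta x u th tau.

Definition est i := th (tau i).

Lemma tau0 : tau 0%nat = 0.
Proof. by case: hyb. Qed.

Lemma tau_cover t : 0 <= t -> exists i, tau i <= t < tau i.+1.
Proof. by case: hyb => _ [] /(_ t). Qed.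

Lemma x_cont : cont_on (fun t => 0 <= t) x.
Proof. by case: hyb => _ [_ []]. Qed.

Lemma u_piece i t : tau i <= t < tau i.+1 -> u t = k (est i) (x t).
Proof. by case: hyb => _ [_ [_ /(_ i) [/(_ t) H _]]] /H []. Qed.

Lemma x_rderiv_event i :
  vrderiv x (tau i) (plant f g (x (tau i)) (k (est i) (x (tau i))) theta).
Proof. by case: hyb => _ [_ [_ /(_ i) [_ []]]]. Qed.

Lemma x_deriv_piece i t : tau i < t < tau i.+1 ->
  vderiv x t (plant f g (x t) (k (est i) (x t)) theta).
Proof.
move=> t_in; rewrite -u_piece; last lra.
by case: hyb => _ [_ [_ /(_ i) [_ [_ [/(_ t t_in) ]]]]].
Qed.

Lemma event_zero i : x (tau i) = vzero -> tau i.+1 = tau i + T.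
Proof. by case: hyb => _ [_ [_ /(_ i) [_ [_ [_ []]]]]]. Qed.

Lemma event_trigger i : x (tau i) <> vzero ->
  Rbar.Finite (tau i.+1) = Rbar_min (Rbar.Finite (tau i + T))
    (Glb_Rbar (fun t => tau i < t /\ V (est i) (x t) = Q (est i) (x (tau i)) + a (x (tau i)))).
Proof. by case: hyb => _ [_ [_ /(_ i) [_ [_ [_ [_ []]]]]]]. Qed.

Lemma estimator_update i mu : is_min (mu_set tau T Ntil i) mu ->
  mvmul (Gmat g x u mu (tau i.+1)) (est i.+1) = Zvec f g x u mu (tau i.+1) /\
  forall v : vec l, mvmul (Gmat g x u mu (tau i.+1)) v = Zvec f g x u mu (tau i.+1) ->
    vnorm (vsub (est i.+1) (est i)) <= vnorm (vsub v (est i)).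
Proof. by case: hyb => _ [_ [_ /(_ i) [_ [_ [_ [_ [_ /(_ mu)]]]]]]]. Qed.

Lemma tau_step i : tau i <= tau i.+1 <= tau i + T.
Proof.
case: (classic (x (tau i) = vzero)) => [/event_zero -> | /event_trigger]; first lra.
move/Rbar_min_Glb_Rbar_bounds => [le_T [_ glb]]; split => //.
by have := glb (tau i) (fun s s_in => Rlt_le _ _ (proj1 s_in)); rewrite Rmin_right; lra.
Qed.

Lemma tau_mono i j : (i <= j)%nat -> tau i <= tau j.
Proof.
move=> /subnKC <-; elim: (j - i)%nat => [|d IH]; first by rewrite addn0; lra.
by rewrite addnS; have := tau_step (i + d); lra.
Qed.

Lemma tau_ge0 i : 0 <= tau i.
Proof. by rewrite -tau0; apply: tau_mono. Qed.

Lemma tau_le i : tau i <= INR i * T.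
Proof.
elim: i => [|i IH]; first by rewrite tau0 /=; lra.
by have := tau_step i; rewrite S_INR; lra.
Qed.

Lemma x_cont_piece i : cont_on (fun t => tau i <= t <= tau i.+1) x.
Proof. by apply: cont_on_subset x_cont => t; have := tau_ge0 i; lra. Qed.

Lemma V_along_x_cont_within th0 : cont_within (fun t => 0 <= t) (fun r => V th0 (x r)).
Proof. exact: (cont_on_comp2 V _ (fun _ => th0) x hVc (cont_on_const _ th0) x_cont). Qed.

Lemma V_below_level i : x (tau i) <> vzero ->
  V (est i) (x (tau i)) < Q (est i) (x (tau i)) + a (x (tau i)).
Proof. by move=> xi0; have := hVQ (est i) (x (tau i)); have := proj2 hapd _ xi0; lra. Qed.

Lemma tau_lt i : tau i < tau i.+1.
Proof.
case: (classic (x (tau i) = vzero)) => [/event_zero -> | xi0]; first lra.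
have [_ [_ glb]] := Rbar_min_Glb_Rbar_bounds _ _ _ (event_trigger i xi0).
have lvl := V_below_level i xi0.
set c := Q (est i) (x (tau i)) + a (x (tau i)) in lvl glb *.
have [d [d0 Hd]] :=
  V_along_x_cont_within (est i) (tau i) (tau_ge0 i) (c - V (est i) (x (tau i))) ltac:(lra).
suff : Rmin (tau i + T) (tau i + d) <= tau i.+1 by rewrite /Rmin; case: Rle_dec; lra.
apply: glb => s [s_gt Vs]; apply: Rnot_lt_le => s_lt.
have := Hd s ltac:(have := tau_ge0 i; lra) ltac:(rewrite Rabs_pos_eq; lra).
by rewrite Vs; have := Rle_abs (c - V (est i) (x (tau i))); lra.
Qed.

(* The trigger fires the first time [V] reaches the level, so by the intermediate value
   theorem it cannot be exceeded before. *)
Lemma V_le_level i : x (tau i) <> vzero -> forall t, tau i <= t <= tau i.+1 ->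
  V (est i) (x t) <= Q (est i) (x (tau i)) + a (x (tau i)).
Proof.
move=> xi0 t t_in; have [_ [first_hit _]] := Rbar_min_Glb_Rbar_bounds _ _ _ (event_trigger i xi0).
have lvl := V_below_level i xi0.
set c := Q (est i) (x (tau i)) + a (x (tau i)) in first_hit lvl *.
apply: Rnot_lt_le => c_lt.
have ti_t : tau i < t by case: (Req_dec t (tau i)) => [e | ne]; [rewrite e in c_lt |]; lra.
set phi := fun r => V (est i) (x (clamp (tau i) t r)) - c.
have phic : continuity phi.
  move=> r; apply/continuity_pt_filterlim.
  apply: (continuous_minus (fun r => V (est i) (x (clamp (tau i) t r))) (fun _ => c));
    last exact: continuous_const.
  apply: (continuous_clamp_comp (tau i) t (fun z => V (est i) (x z))); first lra.
  by apply: cont_within_subset (V_along_x_cont_within (est i)) => s; have := tau_ge0 i; lra.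
case: (IVT_gen phi (tau i) t 0 phic) => [| s [s_in phis]].
  by rewrite /phi !clamp_id; try lra; rewrite /Rmin /Rmax; repeat destruct Rle_dec; lra.
move: s_in phis; rewrite Rmin_left ?Rmax_right; try lra.
move=> s_in; rewrite /phi clamp_id // => Vs; have ti_s : tau i < s.
  by case: (Req_dec s (tau i)) => [e | ne]; [rewrite e in Vs |]; lra.
have : tau i.+1 <= s by apply: first_hit; split => //; lra.
by case: (Req_dec s t) => [e | ne]; [rewrite e in Vs |]; lra.
Qed.

Lemma piece_of_time i t : tau i <= t -> exists j, (i <= j)%nat /\ tau j <= t < tau j.+1.
Proof.
move=> t_ge; have [j t_in] := tau_cover t (Rle_trans _ _ _ (tau_ge0 i) t_ge).
exists j; split => //; case: (leqP i j) => // ji.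
by have := tau_mono j.+1 i ji; lra.
Qed.

Definition piece_fun (Psi : vec n -> vec m -> R) i r :=
  Psi (x (clamp (tau i) (tau i.+1) r)) (k (est i) (x (clamp (tau i) (tau i.+1) r))).

Lemma piece_fun_continuous Psi i r : comp_continuous Psi -> continuous (piece_fun Psi i) r.
Proof.
move=> Psic; apply: (continuous_clamp_comp _ _ (fun z => Psi (x z) (k (est i) (x z)))).
  by have := tau_lt i; lra.
apply: Psic; first exact: x_cont_piece.
by apply: cont_on_feedback; [move=> j; exact: (hk j nil).1 | exact: x_cont_piece].
Qed.

Lemma piece_fun_eq Psi i r : tau i <= r < tau i.+1 -> Psi (x r) (u r) = piece_fun Psi i r.
Proof. by move=> r_in; rewrite /piece_fun clamp_id ?(u_piece i) //; lra. Qed.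

Lemma is_RInt_piece Psi i s t : comp_continuous Psi ->
  tau i <= s <= tau i.+1 -> tau i <= t <= tau i.+1 ->
  is_RInt (fun r => Psi (x r) (u r)) s t (RInt (piece_fun Psi i) s t).
Proof.
move=> Psic s_in t_in; apply: (is_RInt_ext (piece_fun Psi i)).
  by move=> r; rewrite /Rmin /Rmax; case: Rle_dec => _ r_in; rewrite (piece_fun_eq _ i) //; lra.
by apply: RInt_correct; apply: ex_RInt_continuous_all => r; apply: piece_fun_continuous.
Qed.

Lemma ex_RInt_from0 Psi t : comp_continuous Psi -> 0 <= t -> ex_RInt (fun r => Psi (x r) (u r)) 0 t.
Proof.
move=> Psic t0; have [i t_in] := tau_cover t t0.
have {t_in} : tau i <= t <= tau i.+1 by lra.
elim: i t {t0} => [|i IH] t t_in.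
  by rewrite -tau0; eexists; apply: (is_RInt_piece _ 0) => //; have := tau_lt 0; lra.
apply: (ex_RInt_Chasles _ 0 (tau i.+1)); first by apply: IH; have := tau_lt i; lra.
by eexists; apply: (is_RInt_piece _ i.+1) => //; have := tau_lt i.+1; lra.
Qed.

Lemma ex_RInt_along Psi s t : comp_continuous Psi -> 0 <= s -> 0 <= t ->
  ex_RInt (fun r => Psi (x r) (u r)) s t.
Proof.
move=> Psic s0 t0; apply: (ex_RInt_Chasles _ s 0); last exact: ex_RInt_from0.
by apply: ex_RInt_swap; apply: ex_RInt_from0.
Qed.

Definition traj_int (Psi : vec n -> vec m -> R) t := RInt (cut0 (fun r => Psi (x r) (u r))) 0 t.

Lemma traj_int_continuous Psi t : comp_continuous Psi -> continuous (traj_int Psi) t.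
Proof. by move=> Psic; apply: continuous_RInt_cut0 => s; apply: ex_RInt_from0. Qed.

Lemma traj_int_sub Psi s t : comp_continuous Psi -> 0 <= s -> 0 <= t ->
  traj_int Psi t - traj_int Psi s = RInt (fun r => Psi (x r) (u r)) s t.
Proof.
move=> Psic s0 t0; rewrite /traj_int -(RInt_cut0 _ s t) // -(RInt_Chasles _ 0 s t);
  try by apply: ex_RInt_cut0 => r; apply: ex_RInt_from0.
by rewrite /plus /=; ring.
Qed.

Lemma traj_int_derive Psi i t : comp_continuous Psi -> tau i < t < tau i.+1 ->
  is_derive (traj_int Psi) t (Psi (x t) (k (est i) (x t))).
Proof.
move=> Psic t_in; have ti0 := tau_ge0 i.
have -> : Psi (x t) (k (est i) (x t)) = piece_fun Psi i t by rewrite /piece_fun clamp_id //; lra.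
apply: (is_derive_ext_loc (fun s => traj_int Psi (tau i) + RInt (piece_fun Psi i) (tau i) s)).
  have d0 : 0 < Rmin (t - tau i) (tau i.+1 - t) by apply: Rmin_glb_lt; lra.
  exists (mkposreal _ d0) => s /=; rewrite /ball /= /AbsRing_ball /abs /minus /plus /opp /= => st.
  have := Rmin_l (t - tau i) (tau i.+1 - t); have := Rmin_r (t - tau i) (tau i.+1 - t) => *.
  have s_in : tau i <= s <= tau i.+1 by split_Rabs; lra.
  rewrite -(is_RInt_unique _ _ _ _ (is_RInt_piece Psi i (tau i) s Psic _ s_in)); last lra.
  by rewrite -traj_int_sub //; [ring | lra].
have pf_d : is_derive (fun s => RInt (piece_fun Psi i) (tau i) s) t (piece_fun Psi i t).
  apply: is_derive_RInt; last exact: piece_fun_continuous.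
  apply: filter_forall => b; apply: RInt_correct.
  by apply: ex_RInt_continuous_all => r; apply: piece_fun_continuous.
have := is_derive_plus _ _ t _ _ (is_derive_const (traj_int Psi (tau i)) t) pf_d.
by rewrite /plus /zero /= Rplus_0_l.
Qed.

Lemma comp_continuous_plant_coord j : comp_continuous (fun z w => plant f g z w theta j).
Proof.
by apply: comp_continuous_plant => [j' | j' c]; [exact: (hf j' nil).1 | exact: (hg j' c nil).1].
Qed.

Lemma comp_continuous_f j : comp_continuous (fun z w => f z w j).
Proof. exact/comp_continuous_vcont2/(hf j nil).1. Qed.

Lemma comp_continuous_g j c : comp_continuous (fun z w => g z w j c).
Proof. exact/comp_continuous_vcont2/(hg j c nil).1. Qed.

Lemma piecewise_const (W : R -> R) :
  (forall i t, tau i <= t <= tau i.+1 -> W t = W (tau i)) -> forall t, 0 <= t -> W t = W 0.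
Proof.
move=> W_piece t t0; have [i t_in] := tau_cover t t0.
have {t_in} : tau i <= t <= tau i.+1 by lra.
elim: i t {t0} => [|i IH] t t_in; first by rewrite -tau0; apply: (W_piece 0%nat).
by rewrite (W_piece i.+1 t) // (IH (tau i.+1)) //; have := tau_lt i; lra.
Qed.

Lemma x_ftc j s t : 0 <= s -> 0 <= t ->
  x t j - x s j = RInt (fun r => plant f g (x r) (u r) theta j) s t.
Proof.
set P := fun z w => plant f g z w theta j; have Pc := comp_continuous_plant_coord j.
suff W_const : forall t, 0 <= t -> x t j - traj_int P t = x 0 j - traj_int P 0.
  by move=> s0 t0; rewrite -(traj_int_sub P) //; have := W_const s s0; have := W_const t t0; lra.
apply: piecewise_const => i t' t_in; case: (Req_dec t' (tau i)) => [-> // | tNi].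
have W_c : cont_within (fun r => tau i <= r <= t') (fun r => x r j - traj_int P r).
  apply: cont_within_minus; last by apply: cont_within_of_continuous => r; apply: traj_int_continuous.
  by apply: cont_on_coord; apply: cont_on_subset (x_cont_piece i) => r; lra.
have [|r r_in|c [_]] := MVT_cont_within _ (fun _ => 0) _ _ _ W_c; [lra | | by rewrite Rmult_0_l; lra].
have := is_derive_minus _ _ r _ _ (x_deriv_piece i r ltac:(lra) j) (traj_int_derive P i r Pc ltac:(lra)).
by rewrite /minus /plus /opp /= Rplus_opp_r.
Qed.

Lemma p_fun_q_fun j s t : 0 <= s -> 0 <= t ->
  p_fun f x u t s j = rsum (fun c => theta c * q_fun g x u t s j c).
Proof.
move=> s0 t0; rewrite /p_fun x_ftc // /plant /vadd /mvmul.
have ex_f := ex_RInt_along _ s t (comp_continuous_f j) s0 t0.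
have ex_gth c : ex_RInt (fun r => theta c * g (x r) (u r) j c) s t.
  have := ex_RInt_scal (fun r => g (x r) (u r) j c) s t (theta c); apply.
  by apply: (ex_RInt_along (fun z w => g z w j c)) => //; exact: comp_continuous_g.
rewrite (RInt_ext _ (fun r => f (x r) (u r) j + rsum (fun c => theta c * g (x r) (u r) j c)));
  last by move=> r _; congr (_ + _); apply: rsum_ext => c; ring.
rewrite (RInt_plus (fun r => f (x r) (u r) j)) //; last first.
  by eexists; apply: is_RInt_rsum => c; apply: RInt_correct.
rewrite RInt_rsum // /plus /= (_ : forall a b : R, a + b - a = b); last by move=> *; ring.
apply: rsum_ext => c; rewrite /q_fun (RInt_scal (fun r => g (x r) (u r) j c)) //.
by apply: (ex_RInt_along (fun z w => g z w j c)) => //; exact: comp_continuous_g.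
Qed.

Definition Qg j c := traj_int (fun z w => g z w j c).

Lemma Qg_continuous j c t : continuous (Qg j c) t.
Proof. exact/traj_int_continuous/comp_continuous_g. Qed.

Lemma q_fun_Qg j c t s : 0 <= t -> 0 <= s -> q_fun g x u t s j c = Qg j c t - Qg j c s.
Proof. by move=> t0 s0; rewrite /Qg traj_int_sub //; exact: comp_continuous_g. Qed.

Section Window.
Variables (al be : R).
Hypothesis al0 : 0 <= al.
Hypothesis al_be : al < be.

Lemma window_ge0 r : Rmin al be < r < Rmax al be -> 0 <= r.
Proof. by rewrite Rmin_left; lra. Qed.

Lemma Gmat_cov_form c1 c2 :
  Gmat g x u al be c1 c2 = rsum (fun j => cov_form (Qg j c1) (Qg j c2) al be).
Proof.
rewrite /Gmat -RInt_RInt_rsum_cov_form; try by move=> *; apply: Qg_continuous.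
apply: RInt_ext => t /window_ge0 t0; apply: RInt_ext => s /window_ge0 s0.
by apply: rsum_ext => j; rewrite !q_fun_Qg.
Qed.

Definition Qg_theta j t := rsum (fun c => theta c * Qg j c t).

Lemma Qg_theta_continuous j t : continuous (Qg_theta j) t.
Proof. exact/continuous_rsum_scal/Qg_continuous. Qed.

Lemma Zvec_cov_form c : Zvec f g x u al be c = rsum (fun j => cov_form (Qg j c) (Qg_theta j) al be).
Proof.
rewrite /Zvec -RInt_RInt_rsum_cov_form;
  [| by move=> *; apply: Qg_continuous | exact: Qg_theta_continuous].
apply: RInt_ext => t /window_ge0 t0; apply: RInt_ext => s /window_ge0 s0.
apply: rsum_ext => j; rewrite q_fun_Qg // p_fun_q_fun //; congr (_ * _).
by rewrite /Qg_theta -rsum_minus; apply: rsum_ext => c2; rewrite q_fun_Qg //; ring.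
Qed.

(* Along the trajectory [p(t,s) = q(t,s) theta], see [p_fun_q_fun]. *)
Lemma Gmat_theta : mvmul (Gmat g x u al be) theta = Zvec f g x u al be.
Proof.
apply: functional_extensionality => c; rewrite Zvec_cov_form /mvmul.
rewrite (rsum_ext _ (fun j => rsum (fun c2 => theta c2 * cov_form (Qg j c) (Qg j c2) al be)));
  last first.
  by move=> j; rewrite /Qg_theta cov_form_rsum_r //; move=> *; apply: Qg_continuous.
rewrite rsum_swap; apply: rsum_ext => c2.
by rewrite Gmat_cov_form Rmult_comm -rsum_scal; apply: rsum_ext => j; ring.
Qed.

(* [v' G v] is the sum over [j] of the double-integral form of [t |-> sum_c v_c Qg j c t]
   with itself, which vanishes only for functions that are constant on the window. *)
Lemma Gmat_kernel_const (v : vec l) : mvmul (Gmat g x u al be) v = vzero ->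
  forall j t, al <= t <= be -> rsum (fun c => v c * Qg j c t) = rsum (fun c => v c * Qg j c al).
Proof.
move=> Gv0; pose A j t := rsum (fun c => v c * Qg j c t).
have Ac j t : continuous (A j) t by apply/continuous_rsum_scal/Qg_continuous.
have Qgc j c t := Qg_continuous j c t.
have cov_A j : cov_form (A j) (A j) al be =
    rsum (fun c1 => rsum (fun c2 => v c1 * v c2 * cov_form (Qg j c1) (Qg j c2) al be)).
  rewrite {2}/A cov_form_rsum_r //; apply: rsum_ext => c1.
  rewrite cov_formC /A cov_form_rsum_r // -rsum_scal.
  by apply: rsum_ext => c2; ring.
have sum_cov_A : rsum (fun j => cov_form (A j) (A j) al be) = 0.
  have : rsum (fun c1 => v c1 * mvmul (Gmat g x u al be) v c1) = 0.
    by rewrite Gv0 /vzero (rsum_ext _ (fun _ => 0)) ?rsum0 // => c; ring.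
  move <-; rewrite (rsum_ext _ _ cov_A) rsum_swap; apply: rsum_ext => c1.
  rewrite rsum_swap /mvmul -rsum_scal; apply: rsum_ext => c2.
  by rewrite Gmat_cov_form rsum_scal; ring.
move=> j t t_in; apply: (cov_form_self_eq0 (A j) al be) => //.
by apply: (rsum_ge0_eq0 (fun j => cov_form (A j) (A j) al be)) => // j'; apply: cov_form_self_ge0.
Qed.

Lemma Gmat_kernel_g (v : vec l) i : mvmul (Gmat g x u al be) v = vzero ->
  al <= tau i -> tau i.+1 <= be -> forall r, tau i <= r <= tau i.+1 ->
  mvmul (g (x r) (k (est i) (x r))) v = vzero.
Proof.
move=> Gv0 al_i i_be r r_in; apply: functional_extensionality => j; rewrite /vzero /mvmul.
have ti_lt := tau_lt i; have ti0 := tau_ge0 i.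
pose psi t := rsum (fun c => v c * piece_fun (fun z w => g z w j c) i t).
have psi_c t : continuous psi t.
  apply: (continuous_rsum_scal v (fun c => piece_fun (fun z w => g z w j c) i)) => c s.
  by apply: piece_fun_continuous; exact: comp_continuous_g.
have psi0 t : tau i < t < tau i.+1 -> psi t = 0.
  move=> t_in; have A_d : is_derive (fun t => rsum (fun c => v c * Qg j c t)) t (psi t).
    apply: is_derive_rsum => c; apply: is_derive_scal.
    rewrite /piece_fun clamp_id; last lra.
    by apply: traj_int_derive => //; exact: comp_continuous_g.
  rewrite -(is_derive_unique _ _ _ A_d); apply: is_derive_unique.
  apply: (is_derive_ext_loc (fun _ => rsum (fun c => v c * Qg j c al))); last exact: is_derive_const.
  have d0 : 0 < Rmin (t - tau i) (tau i.+1 - t) by apply: Rmin_glb_lt; lra.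
  exists (mkposreal _ d0) => s /=; rewrite /ball /= /AbsRing_ball /abs /minus /plus /opp /= => st.
  have := Rmin_l (t - tau i) (tau i.+1 - t); have := Rmin_r (t - tau i) (tau i.+1 - t) => *.
  by rewrite (Gmat_kernel_const v Gv0 j s) //; split_Rabs; lra.
have := cont_within_zero_closure psi (tau i) (tau i.+1) ti_lt
  (cont_within_of_continuous _ _ psi_c) psi0 r r_in.
by rewrite /psi => <-; apply: rsum_ext => c; rewrite /piece_fun clamp_id //; ring.
Qed.

End Window.

Definition Rleb (r s : R) : bool := if Rle_dec r s then true else false.

Lemma RlebP r s : reflect (r <= s) (Rleb r s).
Proof. by rewrite /Rleb; case: Rle_dec => h; constructor. Qed.

(* [tau i.+1 <= (i + 1) T], so the first [Ntil] windows reach back to time [0]. *)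
Lemma window_start i : exists mu, is_min (mu_set tau T Ntil i) mu /\ 0 <= mu < tau i.+1 /\
  ((i.+1 <= Ntil)%nat -> mu = 0).
Proof.
have N1 : 1 <= INR Ntil by apply: (le_INR 1); apply/leP.
pose P j := (j <= i)%nat && Rleb (tau i.+1 - INR Ntil * T) (tau j).
have [|j /andP [ji /RlebP j_in] j_min] := @ex_minnP P.
  by exists i; rewrite /P leqnn; apply/RlebP; have := tau_step i; nra.
exists (tau j); split; [split | split].
- by exists j.
- by move=> z [j' [j'i [-> z_in]]]; apply: tau_mono; apply: j_min; rewrite /P j'i; apply/RlebP.
- by have := tau_ge0 j; have := tau_mono j i ji; have := tau_lt i; lra.
- move=> iN; suff : (j <= 0)%nat by rewrite leqn0 => /eqP ->; rewrite tau0.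
  apply: j_min; rewrite /P leq0n tau0; apply/RlebP.
  have := tau_le i.+1; have : INR i.+1 <= INR Ntil by apply: le_INR; apply/leP.
  nra.
Qed.

Lemma estimator_step i : exists mu, 0 <= mu < tau i.+1 /\ ((i.+1 <= Ntil)%nat -> mu = 0) /\
  vnorm (vsub (est i.+1) (est i)) <= vnorm (vsub theta (est i)) /\
  mvmul (Gmat g x u mu (tau i.+1)) (vsub (est i.+1) theta) = vzero.
Proof.
have [mu [mu_min [mu_in mu0]]] := window_start i.
have [G_est est_min] := estimator_update i mu mu_min.
exists mu; do 2 (split => //); split; first by apply: est_min; apply: Gmat_theta; lra.
rewrite mvmul_vsub G_est Gmat_theta; try lra.
exact: vsubvv.
Qed.

Lemma est_stays j : est j = theta -> forall i, (j <= i)%nat -> est i = theta.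
Proof.
move=> ej i /subnKC <-; elim: (i - j)%nat => [|d IH]; first by rewrite addn0.
have [_ [_ [_ [step _]]]] := estimator_step (j + d).
rewrite IH vsubvv vnorm0 in step; rewrite addnS.
by apply/vsub_eq0/vnorm_eq0; have := vnorm_ge0 (vsub (est (j + d).+1) theta); lra.
Qed.

Lemma est_error_growth i : vnorm (vsub (est i.+1) theta) <= 2 * vnorm (vsub (est i) theta).
Proof.
have [_ [_ [_ [step _]]]] := estimator_step i.
rewrite (_ : vsub (est i.+1) theta = vadd (vsub (est i.+1) (est i)) (vsub (est i) theta)).
  by apply: vnorm_vadd_le (Rle_refl _); rewrite [X in _ <= X]vnorm_vsubC in step.
by apply: functional_extensionality => c; rewrite /vsub /vadd; ring.
Qed.

Lemma x_zero_on_piece i : x (tau i) = vzero -> forall t, tau i <= t <= tau i.+1 -> x t = vzero.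
Proof.
have [d [d0 [L [L0 HL]]]] := cl_field_lin_bound n m l f g k hf hg hk hf0 hg0 hk0 (est i) theta.
apply: (zero_solution_unique _ _ (fun z => plant f g z (k (est i) z) theta) d L) => //.
- by have := tau_step i; lra.
- exact: x_cont_piece.
- exact: x_deriv_piece.
Qed.

Lemma x_zero_after i : x (tau i) = vzero -> forall t, tau i <= t -> x t = vzero.
Proof.
move=> xi0 t t_ge; have [j [ij t_in]] := piece_of_time i t t_ge.
have xj0 : x (tau j) = vzero.
  move: ij => /subnKC <-; elim: (j - i)%nat => [|d IH]; first by rewrite addn0.
  by rewrite addnS; apply: (x_zero_on_piece (i + d)) => //; have := tau_step (i + d); lra.
by apply: (x_zero_on_piece j) => //; lra.
Qed.

Lemma est_error_le i : vnorm (vsub (est i) theta) <= 2 ^ i * vnorm (vsub (th 0) theta).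
Proof.
elim: i => [|i IH]; first by rewrite /est tau0 /=; lra.
by apply: Rle_trans (est_error_growth i) _; rewrite /=; lra.
Qed.

Lemma x_sq_bound_on_piece i K1 K2 C : 0 < K1 ->
  (forall z, K1 * vnorm z ^ 2 <= V (est i) z) -> (forall z, Q (est i) z <= K2 * vnorm z ^ 2) ->
  (forall z, a z <= C * vnorm z ^ 2) ->
  forall t, tau i <= t <= tau i.+1 -> vnorm (x t) ^ 2 <= (K2 + C) / K1 * vnorm (x (tau i)) ^ 2.
Proof.
move=> K10 VK1 QK2 aC t t_in; case: (classic (x (tau i) = vzero)) => xi0.
  by rewrite (x_zero_on_piece i xi0 t t_in) xi0 vnorm0 /=; lra.
have := V_le_level i xi0 t t_in; have := VK1 (x t); have := QK2 (x (tau i)); have := aC (x (tau i)).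
move=> *; apply: (Rmult_le_reg_l K1) => //.
by rewrite (_ : K1 * (_ / K1 * _) = (K2 + C) * vnorm (x (tau i)) ^ 2); [lra | field; lra].
Qed.

(* Once the estimate has settled at [theta], the right derivative at each later event
   matches the left derivative, so [x] solves the nominal closed loop there as well. *)
Lemma x_deriv_nominal_after j : (forall i, (j <= i)%nat -> est i = theta) ->
  forall t, tau j < t -> vderiv x t (cl_field f g k theta (x t)).
Proof.
move=> est_j t t_gt c; have [i [ji t_in]] := piece_of_time j t (Rlt_le _ _ t_gt).
case: (Rlt_or_le (tau i) t) => ti_t.
  by have := x_deriv_piece i t ltac:(lra) c; rewrite est_j.
have {ti_t} t_eq : t = tau i by lra.
case: i ji t_in t_eq => [|i] ji t_in t_eq; first by rewrite leqn0 in ji; move/eqP: ji t_gt => ->; lra.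
have ji' : (j <= i)%nat.
  by rewrite leq_eqVlt in ji; case/orP: ji => [/eqP e | //]; rewrite e -t_eq in t_gt; lra.
rewrite t_eq.
apply: (is_derive_of_right_quotient _ (fun r => plant f g (x r) (k theta (x r)) theta c) (tau i)).
- exact: tau_lt.
- exact/cont_on_coord/x_cont_piece.
- by move=> r r_in; have := x_deriv_piece i r r_in c; rewrite est_j.
- apply: comp_continuous_plant_coord; first exact: x_cont_piece.
  by apply: cont_on_feedback; [move=> j'; exact: (hk j' nil).1 | exact: x_cont_piece].
- by have := x_rderiv_event i.+1 c; rewrite est_j.
Qed.

Lemma shift_is_nominal_sol j : (forall i, (j <= i)%nat -> est i = theta) ->
  is_sol (cl_field f g k theta) (fun s => x (tau j + s)).
Proof.
move=> est_j; have tj0 := tau_ge0 j; split; last split.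
- move=> t t0 eps e0; have [d [d0 Hd]] := x_cont (tau j + t) ltac:(lra) eps e0.
  exists d; split => // s s0 st; apply: Hd; first lra.
  by rewrite (_ : tau j + s - (tau j + t) = s - t) //; ring.
- move=> c; have := x_rderiv_event j c; rewrite est_j // Rplus_0_r.
  by apply: filterlim_ext => h; rewrite Rplus_0_l.
- move=> s s0 c; have := is_derive_comp (fun r => x r c) (fun s => tau j + s) s _ 1
    (x_deriv_nominal_after j est_j (tau j + s) ltac:(lra) c).
  rewrite scal_one; apply.
  have := is_derive_plus _ _ s _ _ (is_derive_const (tau j) s) (is_derive_id s).
  by rewrite /plus /zero /one /= Rplus_0_l.
Qed.

(* The errors [est i - theta] play the role of the directions [d i] of (H3). *)
Lemma x0_zero_of_est_unsettled N : (N < Ntil)%nat -> H3_prop f g k N ->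
  (forall i, (i <= N)%nat -> est i <> theta) -> x 0 = vzero.
Proof.
move=> NNtil H3 est_ne.
apply: (H3 tau theta (fun i => vsub (est i) theta) x tau0 (fun i _ => tau_lt i)); first last.
- by split; [lra | exact: tau_ge0].
- move=> i j iN ji t t_in; rewrite vadd_vsub.
  have [mu [_ [mu0 [_ G0]]]] := estimator_step i.
  rewrite mu0 in G0; last exact: ltnW (leq_ltn_trans iN NNtil).
  apply: (Gmat_kernel_g 0 (tau i.+1) _ _ _ j G0) => //; try lra.
  + by have := tau_lt i; have := tau_ge0 i; lra.
  + exact: tau_ge0.
  + exact: tau_mono.
- move=> i _; rewrite vadd_vsub; split; first exact: x_rderiv_event.
  exact: x_deriv_piece.
- by apply: cont_on_subset x_cont => t; lra.
- by move=> i iN /vsub_eq0; apply: est_ne.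
Qed.

Lemma x_growth_until N K1 K2 C : 0 < K1 -> 0 <= K2 + C ->
  (forall i, (i < N)%nat -> forall z, K1 * vnorm z ^ 2 <= V (est i) z) ->
  (forall i, (i < N)%nat -> forall z, Q (est i) z <= K2 * vnorm z ^ 2) ->
  (forall z, a z <= C * vnorm z ^ 2) ->
  forall i, (i <= N)%nat -> forall t, 0 <= t <= tau i ->
    vnorm (x t) <= ((K2 + C) / K1 + 1) ^ i * vnorm (x 0).
Proof.
move=> K10 KC0 VK1 QK2 aC; set G := (K2 + C) / K1 + 1.
have G1 : 1 <= G by rewrite /G; have := Rle_mult_inv_pos _ _ KC0 K10; lra.
elim => [|i IH] iN t t_in; first by rewrite tau0 in t_in; rewrite (_ : t = 0) /=; lra.
have Gi1 : 1 <= G ^ i by apply: pow_R1_Rle.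
have x00 := vnorm_ge0 (x 0).
case: (Rle_or_lt t (tau i)) => t_le.
  apply: Rle_trans (IH (ltnW iN) t ltac:(lra)) _; rewrite /=.
  by apply: Rmult_le_compat_r => //; nra.
have xt_le : vnorm (x t) <= G * vnorm (x (tau i)).
  apply: sq_le_lin; try exact: vnorm_ge0; first by apply: Rle_mult_inv_pos.
  by apply: (x_sq_bound_on_piece i K1 K2 C) => //; [apply: VK1 | apply: QK2 | lra].
apply: Rle_trans xt_le _; rewrite /= Rmult_assoc; apply: Rmult_le_compat_l; first lra.
by apply: IH; [exact: ltnW | have := tau_ge0 i; lra].
Qed.

Lemma x_exp_bound N Mg omg K1 K2 C : (N < Ntil)%nat -> H3_prop f g k N -> 0 < Mg -> 0 < omg ->
  (forall y, is_sol (cl_field f g k theta) y -> forall t, 0 <= t ->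
     vnorm (y t) <= Mg * exp (- omg * t) * vnorm (y 0)) ->
  0 < K1 -> 0 <= K2 + C ->
  (forall i, (i < N)%nat -> forall z, K1 * vnorm z ^ 2 <= V (est i) z) ->
  (forall i, (i < N)%nat -> forall z, Q (est i) z <= K2 * vnorm z ^ 2) ->
  (forall z, a z <= C * vnorm z ^ 2) ->
  forall t, 0 <= t -> vnorm (x t) <=
    (Mg + 1) * exp (omg * (INR N * T)) * ((K2 + C) / K1 + 1) ^ N * exp (- omg * t) * vnorm (x 0).
Proof.
move=> NNtil H3 Mg0 omg0 GES K10 KC0 VK1 QK2 aC t t0.
have growth := x_growth_until N K1 K2 C K10 KC0 VK1 QK2 aC.
set G := (K2 + C) / K1 + 1; set E := exp (omg * (INR N * T)) * exp (- omg * t).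
have G1 : 1 <= G by rewrite /G; have := Rle_mult_inv_pos _ _ KC0 K10; lra.
have x00 := vnorm_ge0 (x 0).
have GN0 : 0 <= G ^ N * vnorm (x 0) by apply: Rmult_le_pos => //; apply: pow_le; lra.
have E0 : 0 < E by apply: Rmult_lt_0_compat; apply: exp_pos.
suff : vnorm (x t) <= (Mg + 1) * E * (G ^ N * vnorm (x 0)) by rewrite /E; lra.
case: (classic (exists j, (j <= N)%nat /\ est j = theta)) => [[j [jN est_j]] | unsettled]; last first.
  have x0 := x0_zero_of_est_unsettled N NNtil H3 (fun i iN e => unsettled (ex_intro _ i (conj iN e))).
  by rewrite (x_zero_after 0 ltac:(by rewrite tau0) t ltac:(rewrite tau0; lra)) x0 vnorm0; nra.
have tj_NT : tau j <= INR N * T.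
  have := tau_le j; have : INR j <= INR N by apply: le_INR; apply/leP.
  nra.
have Gj : G ^ j <= G ^ N by apply: Rle_pow => //; apply/leP.
have xj : vnorm (x (tau j)) <= G ^ N * vnorm (x 0).
  apply: Rle_trans (growth j jN (tau j) _) _; first by have := tau_ge0 j; lra.
  exact: Rmult_le_compat_r.
case: (Rle_or_lt t (tau j)) => t_le.
  have E1 : 1 <= E.
    by have := exp_shift_le omg t (INR N * T) t; rewrite Rminus_diag Rmult_0_r exp_0; apply; lra.
  apply: Rle_trans (growth j jN t ltac:(lra)) _.
  apply: Rle_trans (Rmult_le_compat_r _ _ _ x00 Gj) _.
  rewrite -{1}(Rmult_1_l (G ^ N * _)); apply: Rmult_le_compat_r => //; nra.
have := GES _ (shift_is_nominal_sol j (est_stays j est_j)) (t - tau j) ltac:(lra).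
rewrite (_ : tau j + (t - tau j) = t) ?Rplus_0_r; last ring.
have := exp_shift_le omg (tau j) (INR N * T) t ltac:(lra) tj_NT; rewrite -/E.
have := exp_pos (- omg * (t - tau j)); have := vnorm_ge0 (x (tau j)).
move=> *; apply: Rle_trans; first eassumption.
have : Mg * exp (- omg * (t - tau j)) * vnorm (x (tau j)) <= Mg * E * (G ^ N * vnorm (x 0)).
  by apply: Rmult_le_compat => //; nra.
nra.
Qed.

End HybridTrajectory.

Arguments est {l} th tau i.
Arguments est_error_le {n m l f g k V Q} hf hg hk hVc hVQ {T Ntil a} hT hNtil hapd
  {theta x u th tau} hyb i.
Arguments x_exp_bound {n m l f g k V Q} hf hg hk hf0 hg0 hk0 hVc hVQ {T Ntil a} hT hNtil hapd
  {theta x u th tau} hyb N Mg omg K1 K2 C.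

(** * Exponential bound *)

Lemma quadratic_bound_of_sup {n} (a : vec n -> R) : posdef a ->
  (exists C, forall x, x <> vzero -> a x / vnorm x ^ 2 <= C) ->
  exists C, 0 <= C /\ forall z, a z <= C * vnorm z ^ 2.
Proof.
move=> [a0 _] [C HC]; exists (Rmax C 0); split => [|z]; first exact: Rmax_r.
case: (classic (z = vzero)) => [-> | z0].
  by rewrite a0 vnorm0; apply: Rmult_le_pos; [exact: Rmax_r | exact: pow2_ge_0].
have zn := vnorm_gt0 z z0; have z2 : 0 < vnorm z ^ 2 by apply: pow_lt.
rewrite (_ : a z = a z / vnorm z ^ 2 * vnorm z ^ 2); last by field; lra.
by apply: Rmult_le_compat_r; [lra | apply: Rle_trans (HC z z0) (Rmax_l _ _)].
Qed.

Section ExponentialBound.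
Variables (n m l : nat) (f : vec n -> vec m -> vec n) (g : vec n -> vec m -> mat n l)
  (k : vec l -> vec n -> vec m) (V Q : vec l -> vec n -> R).
Hypothesis hf : forall j, smooth2 (fun x u => f x u j).
Hypothesis hg : forall j c, smooth2 (fun x u => g x u j c).
Hypothesis hk : forall j, smooth2 (fun th x => k th x j).
Hypothesis hf0 : f vzero vzero = vzero.
Hypothesis hg0 : g vzero vzero = mzero.
Hypothesis hk0 : forall th, k th vzero = vzero.
Hypothesis hVc : vcont2 V.
Hypothesis hK : forall Th : vec l -> Prop, (exists th, Th th) -> compact_set Th ->
  exists K1 K2, 0 < K1 < K2 /\ forall x th, Th th ->
    K1 * vnorm x ^ 2 <= V th x /\ V th x <= Q th x /\ Q th x <= K2 * vnorm x ^ 2.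
Variables (T : R) (N Ntil : nat) (a : vec n -> R) (C : R).
Hypothesis hT : 0 < T.
Hypothesis hN : (1 <= N)%nat.
Hypothesis hNtil : (N < Ntil)%nat.
Hypothesis H3 : H3_prop f g k N.
Hypothesis hapd : posdef a.
Hypothesis C0 : 0 <= C.
Hypothesis aC : forall z, a z <= C * vnorm z ^ 2.
Variables (Mg omg : vec l -> R).
Hypothesis hGES : forall th, 0 < Mg th /\ 0 < omg th /\
  forall x, is_sol (cl_field f g k th) x -> forall t, 0 <= t ->
    vnorm (x t) <= Mg th * exp (- omg th * t) * vnorm (x 0).

Lemma V_le_Q th z : V th z <= Q th z.
Proof.
have th_in : box th 0 th by move=> c; lra.
have [K1 [K2 [_ HK]]] := hK (box th 0) (ex_intro _ th th_in) (box_compact th 0 (Rle_refl 0)).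
by case: (HK z th th_in) => _ [].
Qed.

(* The first [N + 1] estimates stay within [2 ^ N |th0 - theta|] of [theta]; on that
   compact box the quadratic bounds on [V] and [Q] are uniform. *)
Lemma hybrid_exp_bound theta th0 : exists M, 0 < M /\
  forall x u th tau, hybrid_sol f g k V Q a T Ntil theta x u th tau -> th 0 = th0 ->
    forall t, 0 <= t -> vnorm (x t) <= M * exp (- omg theta * t) * vnorm (x 0).
Proof.
set r := 2 ^ N * vnorm (vsub th0 theta).
have r0 : 0 <= r by apply: Rmult_le_pos; [apply: pow_le; lra | exact: vnorm_ge0].
set B := box (fun c => theta c - r) (2 * r).
have theta_in : B theta by apply: box_of_vnorm; rewrite vsubvv vnorm0.
have [K1 [K2 [K12 HK]]] :=
  hK B (ex_intro _ theta theta_in) (box_compact (fun c => theta c - r) (2 * r) ltac:(lra)).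
have [Mg0 [omg0 GES]] := hGES theta.
have G0 : 0 < (K2 + C) / K1 + 1 by have := Rle_mult_inv_pos (K2 + C) K1 ltac:(lra) ltac:(lra); lra.
exists ((Mg theta + 1) * exp (omg theta * (INR N * T)) * ((K2 + C) / K1 + 1) ^ N); split.
  by apply: Rmult_lt_0_compat; [apply: Rmult_lt_0_compat; [lra | exact: exp_pos] | exact: pow_lt].
move=> x u th tau hyb th00 t t0.
have Ntil1 : (1 <= Ntil)%nat by apply: leq_trans hN (ltnW hNtil).
have est_in i : (i < N)%nat -> B (est th tau i).
  move=> iN; apply: box_of_vnorm.
  apply: Rle_trans (est_error_le hf hg hk hVc V_le_Q hT Ntil1 hapd hyb i) _.
  rewrite th00; apply: Rmult_le_compat_r; first exact: vnorm_ge0.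
  by apply: Rle_pow; [lra | apply/leP; exact: ltnW].
have := x_exp_bound hf hg hk hf0 hg0 hk0 hVc V_le_Q hT Ntil1 hapd hyb N (Mg theta) (omg theta)
  K1 K2 C hNtil H3 Mg0 omg0 GES ltac:(lra) ltac:(lra)
  (fun i iN z => proj1 (HK z _ (est_in i iN))) (fun i iN z => proj2 (proj2 (HK z _ (est_in i iN))))
  aC t t0.
by rewrite (Rmult_assoc _ (exp _)) (Rmult_comm (exp _)) -!Rmult_assoc.
Qed.

End ExponentialBound.

Theorem theorem3p3 (n m l : nat) (hn : (0 < n)%nat) (hm : (0 < m)%nat) (hl : (0 < l)%nat)
  (f : vec n -> vec m -> vec n) (g : vec n -> vec m -> mat n l)
  (k : vec l -> vec n -> vec m) (V Q : vec l -> vec n -> R)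
  (hf : forall j, smooth2 (fun x u => f x u j))
  (hg : forall j c, smooth2 (fun x u => g x u j c))
  (hk : forall j, smooth2 (fun th x => k th x j))
  (hf0 : f vzero vzero = vzero) (hg0 : g vzero vzero = mzero)
  (hk0 : forall th, k th vzero = vzero)
  (hVnn : forall th x, 0 <= V th x) (hQnn : forall th x, 0 <= Q th x)
  (hVc : vcont2 V) (hQc : vcont2 Q)
  (hVpd : forall th, posdef (V th)) (hQpd : forall th, posdef (Q th))
  (hVru : forall th, rad_unbounded (V th)) (hQru : forall th, rad_unbounded (Q th))
  (H1 : forall th, GAS (cl_field f g k th) /\
     forall x, is_sol (cl_field f g k th) x -> forall t, 0 <= t -> V th (x t) <= Q th (x 0))
  (H2 : forall Th : vec l -> Prop, (exists th, Th th) -> compact_set Th ->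
     forall M, 0 <= M -> exists Rr, 0 < Rr /\
       forall th x, Th th -> V th x <= M -> vnorm x <= Rr)
  (N : nat) (hN : (1 <= N)%nat) (H3 : H3_prop f g k N)
  (Mg omg : vec l -> R)
  (hGES : forall th, 0 < Mg th /\ 0 < omg th /\
     forall x, is_sol (cl_field f g k th) x -> forall t, 0 <= t ->
       vnorm (x t) <= Mg th * exp (- omg th * t) * vnorm (x 0))
  (hK : forall Th : vec l -> Prop, (exists th, Th th) -> compact_set Th ->
     exists K1 K2, 0 < K1 < K2 /\ forall x th, Th th ->
       K1 * vnorm x ^ 2 <= V th x /\ V th x <= Q th x /\ Q th x <= K2 * vnorm x ^ 2)
  (T : R) (hT : 0 < T)
  (a : vec n -> R) (hac : vcont1 a) (hann : forall x, 0 <= a x) (hapd : posdef a)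
  (hasup : exists C, forall x, x <> vzero -> a x / vnorm x ^ 2 <= C)
  (Ntil : nat) (hNtil : (N < Ntil)%nat) :
  exists Mt : vec l -> vec l -> R, (forall th th0, 0 < Mt th th0) /\
  forall (theta : vec l) (x0 : vec n) (th0 : vec l)
         (x : R -> vec n) (u : R -> vec m) (th : R -> vec l) (tau : nat -> R),
    hybrid_sol f g k V Q a T Ntil theta x u th tau -> x 0 = x0 -> th 0 = th0 ->
    forall t, 0 <= t -> vnorm (x t) <= Mt theta th0 * exp (- omg theta * t) * vnorm x0.
Proof.
have [C [C0 aC]] := quadratic_bound_of_sup a hapd hasup.
pose HM theta th0 := hybrid_exp_bound n m l f g k V Q hf hg hk hf0 hg0 hk0 hVc hK T N Ntil a C
  hT hN hNtil H3 hapd C0 aC Mg omg hGES theta th0.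
exists (fun theta th0 => proj1_sig (constructive_indefinite_description _ (HM theta th0))).
split => [theta th0 | theta x0 th0 x u th tau hyb <- th00 t t0];
  case: (constructive_indefinite_description _ _) => M [M0 HMt] //=.
exact: HMt hyb th00 t t0.
Qed.
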